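(* Consider the linearized ADM iteration described in the context and suppose that $\mu\geq\sqrt2\max\{\rho_1,\rho_2\}$. Then there exist positive values $\eta^0_U,\eta^0_Q,\eta^0_W,R$, depending only on the initialization, such that whenever $\eta_U>\eta^0_U$, $\eta_Q>\eta^0_Q$, $\eta_W>\eta^0_W$, the sequence $\{\Theta_k=(\Omega_k,U_k,Q_k,W_k,\varepsilon^{(1)}_k,\varepsilon^{(2)}_k,Z^{(1)}_k,Z^{(2)}_k)\}$ satisfies: (1) for $k=0,1,2,\dots$, $\|\Theta_k\|:=\max\{\|\Omega_k\|,\|U_k\|,\|Q_k\|,\|W_k\|,\|\varepsilon^{(1)}_k\|,\|\varepsilon^{(2)}_k\|,\|Z^{(1)}_k\|,\|Z^{(2)}_k\|\}<R$, so the iterates lie in a compact set; (2) every convergent subsequence of $\{\Theta_k\}$ converges to a point of $S$; (3) $\mathrm{dist}(\Theta_k,S)\to0$ as $k\to\infty$, where $\mathrm{dist}(\Theta,S)=\min_{\Theta'\in S}\|\Theta'-\Theta\|$. Here $$S=\Big\{\Theta=(\Omega,U,Q,W,\varepsilon^{(1)},\varepsilon^{(2)},Z^{(1)},Z^{(2)}) \;\Big|\; \|\Theta\|<R,\ -\nabla L_s(\Theta)\in\lambda_1\partial\|U\|_1,\ H=QU+\varepsilon^{(1)},\ Y=WQU+\varepsilon^{(2)}\Big\},$$ with $\|U\|_1$ regarded as a convex function of $\Theta$ constant in all components other than $U$ (so the inclusion means $-\nabla_U L_s(\Theta)\in\lambda_1\partial\|U\|_1$ and all other partial gradients of $L_s$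 vanish).
   Context: Data: $X\in\mathbb{R}^{m\times n}$, $H\in\mathbb{R}^{s\times n}$, $Y\in\mathbb{R}^{c\times n}$; parameters $\lambda_1,\lambda_2,\rho_1,\rho_2,\delta_1,\delta_2,\mu>0$ and step parameters $\eta_U,\eta_Q,\eta_W>0$. Variables: $\Omega\in\mathbb{R}^{r\times m}$, $U\in\mathbb{R}^{r\times n}$, $Q\in\mathbb{R}^{s\times r}$, $W\in\mathbb{R}^{c\times s}$, $\varepsilon^{(1)},Z^{(1)}\in\mathbb{R}^{s\times n}$, $\varepsilon^{(2)},Z^{(2)}\in\mathbb{R}^{c\times n}$. Matrix norms are Frobenius norms, $\langle A,B\rangle=\mathrm{tr}(A^TB)$, $\|U\|_1=\sum_{ij}|U_{ij}|$. The Lagrangian is $L(\Omega,U,Q,W,\varepsilon^{(1)},\varepsilon^{(2)},Z^{(1)},Z^{(2)})=\frac12\|U-\Omega X\|_F^2+\lambda_1\|U\|_1+\frac{\rho_1}{2}\|\varepsilon^{(1)}\|^2+\frac{\rho_2}{2}\|\varepsilon^{(2)}\|^2+\langle Z^{(1)},H-QU-\varepsilon^{(1)}\rangle+\langle Z^{(2)},Y-WQU-\varepsilon^{(2)}\rangle+\frac{\mu}{2}\|H-QU-\varepsilon^{(1)}\|^2+\frac{\mu}{2}\|Y-WQU-\varepsilon^{(2)}\|^2+\frac{\delta_1}{2}\|Q\|^2+\frac{\delta_2}{2}\|W\|^2+\frac{\lambda_2}{2}\|\Omega\|^2$, and $L_s=L-\lambda_1\|U\|_1$ is its smooth part. Let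 $\tau_t$ be entrywise soft thresholding, $\tau_t(x)=\mathrm{sign}(x)\max(|x|-t,0)$. Starting from an initialization $\Theta_0$, for $k=0,1,2,\dots$: $U_{k+1}=\tau_{\lambda_1/(\mu\eta_U)}\big(U_k-\frac{1}{\mu\eta_U}\nabla_U L_s(\Omega_k,U_k,Q_k,W_k,\varepsilon^{(1)}_k,\varepsilon^{(2)}_k,Z^{(1)}_k,Z^{(2)}_k)\big)$; $Q_{k+1}=Q_k-\frac{1}{\mu\eta_Q}\nabla_Q L(\Omega_k,U_{k+1},Q_k,W_k,\varepsilon^{(1)}_k,\varepsilon^{(2)}_k,Z^{(1)}_k,Z^{(2)}_k)$; $W_{k+1}=W_k-\frac{1}{\mu\eta_W}\nabla_W L(\Omega_k,U_{k+1},Q_{k+1},W_k,\varepsilon^{(1)}_k,\varepsilon^{(2)}_k,Z^{(1)}_k,Z^{(2)}_k)$; $\Omega_{k+1}=\arg\min_\Omega L(\Omega,U_{k+1},Q_{k+1},W_{k+1},\varepsilon^{(1)}_k,\varepsilon^{(2)}_k,Z^{(1)}_k,Z^{(2)}_k)$; $\varepsilon^{(1)}_{k+1}=\arg\min_{\varepsilon^{(1)}} L(\Omega_{k+1},U_{k+1},Q_{k+1},W_{k+1},\varepsilon^{(1)},\varepsilon^{(2)}_k,Z^{(1)}_k,Z^{(2)}_k)$; $\varepsilon^{(2)}_{k+1}=\arg\min_{\varepsilon^{(2)}} L(\Omega_{k+1},U_{k+1},Q_{k+1},W_{k+1},\varepsilon^{(1)}_{k+1},\varepsilon^{(2)},Z^{(1)}_k,Z^{(2)}_k)$;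 $Z^{(1)}_{k+1}=Z^{(1)}_k+\mu(H-Q_{k+1}U_{k+1}-\varepsilon^{(1)}_{k+1})$; $Z^{(2)}_{k+1}=Z^{(2)}_k+\mu(Y-W_{k+1}Q_{k+1}U_{k+1}-\varepsilon^{(2)}_{k+1})$. *)

From HB Require Import structures.
From mathcomp Require Import all_boot all_order all_algebra.
From mathcomp Require Import all_classical all_reals all_analysis.
Set Implicit Arguments. Unset Strict Implicit. Unset Printing Implicit Defensive.
Import Order.TTheory GRing.Theory Num.Theory.
Local Open Scope ring_scope.

Section ADM.
Variable R : realType.

Definition mxinner (a b : nat) (A B : 'M[R]_(a, b)) : R := \tr (A^T *m B).
Definition fnorm (a b : nat) (A : 'M[R]_(a, b)) : R :=
  Num.sqrt (\sum_(i < a) \sum_(j < b) (A i j) ^+ 2).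
Definition l1norm (a b : nat) (A : 'M[R]_(a, b)) : R :=
  \sum_(i < a) \sum_(j < b) `|A i j|.

Definition soft (t : R) (a b : nat) (A : 'M[R]_(a, b)) : 'M[R]_(a, b) :=
  map_mx (fun x => Num.sg x * Num.max (`|x| - t) 0) A.

Definition is_grad (a b : nat) (f : 'M[R]_(a, b) -> R) (X G : 'M[R]_(a, b)) : Prop :=
  forall D : 'M[R]_(a, b),
    is_derive (0 : R) (1 : R) (fun t : R => f (X + t *: D)) (mxinner G D).

Definition is_subgrad (a b : nat) (f : 'M[R]_(a, b) -> R) (X G : 'M[R]_(a, b)) : Prop :=
  forall V : 'M[R]_(a, b), f X + mxinner G (V - X) <= f V.

Definition is_argmin (a b : nat) (f : 'M[R]_(a, b) -> R) (X : 'M[R]_(a, b)) : Prop :=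
  forall V : 'M[R]_(a, b), f X <= f V.

Record adm_params := ADMParams {
  lam1 : R; lam2 : R; rho1 : R; rho2 : R; del1 : R; del2 : R; mu : R }.

Definition params_pos (P : adm_params) : Prop :=
  0 < lam1 P /\ 0 < lam2 P /\ 0 < rho1 P /\ 0 < rho2 P /\
  0 < del1 P /\ 0 < del2 P /\ 0 < mu P.

Section Dims.
Variables m n r s c : nat.

Record state := State {
  Om : 'M[R]_(r, m); Uv : 'M[R]_(r, n); Qv : 'M[R]_(s, r); Wv : 'M[R]_(c, s);
  E1 : 'M[R]_(s, n); E2 : 'M[R]_(c, n); Z1 : 'M[R]_(s, n); Z2 : 'M[R]_(c, n) }.

Definition with_Om (T : state) V := State V (Uv T) (Qv T) (Wv T) (E1 T) (E2 T) (Z1 T) (Z2 T).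
Definition with_U  (T : state) V := State (Om T) V (Qv T) (Wv T) (E1 T) (E2 T) (Z1 T) (Z2 T).
Definition with_Q  (T : state) V := State (Om T) (Uv T) V (Wv T) (E1 T) (E2 T) (Z1 T) (Z2 T).
Definition with_W  (T : state) V := State (Om T) (Uv T) (Qv T) V (E1 T) (E2 T) (Z1 T) (Z2 T).
Definition with_E1 (T : state) V := State (Om T) (Uv T) (Qv T) (Wv T) V (E2 T) (Z1 T) (Z2 T).
Definition with_E2 (T : state) V := State (Om T) (Uv T) (Qv T) (Wv T) (E1 T) V (Z1 T) (Z2 T).
Definition with_Z1 (T : state) V := State (Om T) (Uv T) (Qv T) (Wv T) (E1 T) (E2 T) V (Z2 T).
Definition with_Z2 (T : state) V := State (Om T) (Uv T) (Qv T) (Wv T) (E1 T) (E2 T) (Z1 T) V.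

Definition stnorm (T : state) : R :=
  Num.max (fnorm (Om T)) (Num.max (fnorm (Uv T)) (Num.max (fnorm (Qv T))
  (Num.max (fnorm (Wv T)) (Num.max (fnorm (E1 T)) (Num.max (fnorm (E2 T))
  (Num.max (fnorm (Z1 T)) (fnorm (Z2 T)))))))).

Definition stdist (T T' : state) : R :=
  Num.max (fnorm (Om T - Om T')) (Num.max (fnorm (Uv T - Uv T'))
  (Num.max (fnorm (Qv T - Qv T')) (Num.max (fnorm (Wv T - Wv T'))
  (Num.max (fnorm (E1 T - E1 T')) (Num.max (fnorm (E2 T - E2 T'))
  (Num.max (fnorm (Z1 T - Z1 T')) (fnorm (Z2 T - Z2 T')))))))).

Variables (X : 'M[R]_(m, n)) (H : 'M[R]_(s, n)) (Y : 'M[R]_(c, n)) (P : adm_params).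

Definition Lag (T : state) : R :=
  2^-1 * fnorm (Uv T - Om T *m X) ^+ 2 + lam1 P * l1norm (Uv T)
  + rho1 P / 2 * fnorm (E1 T) ^+ 2 + rho2 P / 2 * fnorm (E2 T) ^+ 2
  + mxinner (Z1 T) (H - Qv T *m Uv T - E1 T)
  + mxinner (Z2 T) (Y - Wv T *m Qv T *m Uv T - E2 T)
  + mu P / 2 * fnorm (H - Qv T *m Uv T - E1 T) ^+ 2
  + mu P / 2 * fnorm (Y - Wv T *m Qv T *m Uv T - E2 T) ^+ 2
  + del1 P / 2 * fnorm (Qv T) ^+ 2 + del2 P / 2 * fnorm (Wv T) ^+ 2
  + lam2 P / 2 * fnorm (Om T) ^+ 2.

Definition Ls (T : state) : R := Lag T - lam1 P * l1norm (Uv T).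

Definition adm_step (etaU etaQ etaW : R) (Tk Tk1 : state) : Prop :=
  let T1 := with_U Tk (Uv Tk1) in
  let T2 := with_Q T1 (Qv Tk1) in
  let T3 := with_W T2 (Wv Tk1) in
  let T4 := with_Om T3 (Om Tk1) in
  let T5 := with_E1 T4 (E1 Tk1) in
  (exists GU, is_grad (fun V => Ls (with_U Tk V)) (Uv Tk) GU /\
        Uv Tk1 = soft (lam1 P / (mu P * etaU)) (Uv Tk - (mu P * etaU)^-1 *: GU)) /\
      (exists GQ, is_grad (fun V => Lag (with_Q T1 V)) (Qv T1) GQ /\
        Qv Tk1 = Qv Tk - (mu P * etaQ)^-1 *: GQ) /\
      (exists GW, is_grad (fun V => Lag (with_W T2 V)) (Wv T2) GW /\
        Wv Tk1 = Wv Tk - (mu P * etaW)^-1 *: GW) /\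
      is_argmin (fun V => Lag (with_Om T3 V)) (Om Tk1) /\
      is_argmin (fun V => Lag (with_E1 T4 V)) (E1 Tk1) /\
      is_argmin (fun V => Lag (with_E2 T5 V)) (E2 Tk1) /\
      Z1 Tk1 = Z1 Tk + mu P *: (H - Qv Tk1 *m Uv Tk1 - E1 Tk1) /\
      Z2 Tk1 = Z2 Tk + mu P *: (Y - Wv Tk1 *m Qv Tk1 *m Uv Tk1 - E2 Tk1).

Definition in_S (Rad : R) (T : state) : Prop :=
  stnorm T < Rad /\
  (exists GU G, is_grad (fun V => Ls (with_U T V)) (Uv T) GU /\
                is_subgrad (@l1norm r n) (Uv T) G /\
                - GU = lam1 P *: G) /\
  is_grad (fun V => Ls (with_Om T V)) (Om T) 0 /\
  is_grad (fun V => Ls (with_Q T V)) (Qv T) 0 /\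
  is_grad (fun V => Ls (with_W T V)) (Wv T) 0 /\
  is_grad (fun V => Ls (with_E1 T V)) (E1 T) 0 /\
  is_grad (fun V => Ls (with_E2 T V)) (E2 T) 0 /\
  is_grad (fun V => Ls (with_Z1 T V)) (Z1 T) 0 /\
  is_grad (fun V => Ls (with_Z2 T V)) (Z2 T) 0 /\
  H = Qv T *m Uv T + E1 T /\
  Y = Wv T *m Qv T *m Uv T + E2 T.

End Dims.
End ADM.

From HB Require Import structures.
From mathcomp Require Import all_boot all_order all_algebra.
From mathcomp Require Import all_classical all_reals all_analysis.
From mathcomp Require Import ring lra zify.
Import Order.TTheory GRing.Theory Num.Theory.
Local Open Scope ring_scope.
Set Implicit Arguments. Unset Strict Implicit. Unset Printing Implicit Defensive.

(* Each block update decreases the augmented Lagrangian [Lag]: the U, Q and W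
   updates are (proximal) gradient steps on functions that are exactly quadratic
   in that block, with curvature at most [lip_const] while the other blocks stay
   bounded, and the Omega and eps updates are exact minimisations.  The
   eps-optimality conditions give [Z = rho eps] after the first step, so the dual
   ascent [||Z_{k+1} - Z_k||^2 / mu] is paid for by the eps-steps as soon as
   [rho_i < mu]; this is all that [sqrt 2 * max rho_i <= mu] is used for.
   Hence [Lag] decreases from the first iterate on, and with the coercivity of
   [Lag + ||Z||^2 / (2 mu)] this bounds the iterates by constants depending only
   on [Theta_0], which in turn fix the step-size thresholds.  The decreases are
   summable, so successive differences vanish and the optimality conditions of
   the updates pass to the limit along any convergent subsequence; compactness
   then gives [dist (Theta_k, S) -> 0]. *)

Section Frobenius.
Variable R : realType.
Implicit Types (a b p : nat).

Definition fnorm2 a b (A : 'M[R]_(a, b)) : R := mxinner A A.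

Lemma mxinnerE a b (A B : 'M[R]_(a, b)) :
  mxinner A B = \sum_(i < a) \sum_(j < b) A i j * B i j.
Proof.
rewrite /mxinner /mxtrace exchange_big /=; apply: eq_bigr => j _.
by rewrite !mxE; apply: eq_bigr => i _; rewrite !mxE.
Qed.

Lemma fnorm2E a b (A : 'M[R]_(a, b)) :
  fnorm2 A = \sum_(i < a) \sum_(j < b) A i j ^+ 2.
Proof. by rewrite /fnorm2 mxinnerE; apply: eq_bigr => i _; apply: eq_bigr => j _; rewrite expr2. Qed.

Lemma fnorm2_ge0 a b (A : 'M[R]_(a, b)) : 0 <= fnorm2 A.
Proof. by rewrite fnorm2E; apply: sumr_ge0 => i _; apply: sumr_ge0 => j _; exact: sqr_ge0. Qed.

Lemma fnormE a b (A : 'M[R]_(a, b)) : fnorm A = Num.sqrt (fnorm2 A).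
Proof. by rewrite fnorm2E. Qed.

Lemma sqr_fnorm a b (A : 'M[R]_(a, b)) : fnorm A ^+ 2 = fnorm2 A.
Proof. by rewrite fnormE sqr_sqrtr // fnorm2_ge0. Qed.

Lemma mxinnerC a b (A B : 'M[R]_(a, b)) : mxinner A B = mxinner B A.
Proof. by rewrite !mxinnerE; apply: eq_bigr => i _; apply: eq_bigr => j _; rewrite mulrC. Qed.

Lemma mxinnerDr a b (A B C : 'M[R]_(a, b)) : mxinner A (B + C) = mxinner A B + mxinner A C.
Proof. by rewrite /mxinner mulmxDr mxtraceD. Qed.

Lemma mxinnerZr a b (A B : 'M[R]_(a, b)) k : mxinner A (k *: B) = k * mxinner A B.
Proof. by rewrite /mxinner -scalemxAr mxtraceZ. Qed.

Lemma mxinnerNr a b (A B : 'M[R]_(a, b)) : mxinner A (- B) = - mxinner A B.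
Proof. by rewrite -scaleN1r mxinnerZr mulN1r. Qed.

Lemma mxinner0r a b (A : 'M[R]_(a, b)) : mxinner A 0 = 0.
Proof. by rewrite /mxinner mulmx0 mxtrace0. Qed.

Lemma mxinnerDl a b (A B C : 'M[R]_(a, b)) : mxinner (B + C) A = mxinner B A + mxinner C A.
Proof. by rewrite mxinnerC mxinnerDr !(mxinnerC A). Qed.

Lemma mxinnerZl a b (A B : 'M[R]_(a, b)) k : mxinner (k *: B) A = k * mxinner B A.
Proof. by rewrite mxinnerC mxinnerZr mxinnerC. Qed.

Lemma mxinnerNl a b (A B : 'M[R]_(a, b)) : mxinner (- B) A = - mxinner B A.
Proof. by rewrite mxinnerC mxinnerNr mxinnerC. Qed.

Lemma mxinnerBl a b (A B C : 'M[R]_(a, b)) : mxinner (B - C) A = mxinner B A - mxinner C A.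
Proof. by rewrite mxinnerDl mxinnerNl. Qed.

Lemma mxinner0l a b (A : 'M[R]_(a, b)) : mxinner 0 A = 0.
Proof. by rewrite mxinnerC mxinner0r. Qed.

Lemma mxinner_mulmxl a b p (A : 'M[R]_(p, a)) (B : 'M[R]_(a, b)) C :
  mxinner C (A *m B) = mxinner (A^T *m C) B.
Proof. by rewrite /mxinner trmx_mul trmxK mulmxA. Qed.

Lemma mxinner_mulmxr a b p (A : 'M[R]_(a, p)) (B : 'M[R]_(p, b)) C :
  mxinner C (A *m B) = mxinner (C *m B^T) A.
Proof. by rewrite /mxinner trmx_mul trmxK mulmxA mxtrace_mulC mulmxA. Qed.

Lemma fnorm2D a b (A B : 'M[R]_(a, b)) :
  fnorm2 (A + B) = fnorm2 A + 2 * mxinner A B + fnorm2 B.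
Proof. rewrite /fnorm2 mxinnerDl !mxinnerDr (mxinnerC B A); ring. Qed.

Lemma fnorm2N a b (A : 'M[R]_(a, b)) : fnorm2 (- A) = fnorm2 A.
Proof. by rewrite /fnorm2 mxinnerNl mxinnerNr opprK. Qed.

Lemma fnorm2Z a b (A : 'M[R]_(a, b)) k : fnorm2 (k *: A) = k ^+ 2 * fnorm2 A.
Proof. by rewrite /fnorm2 mxinnerZl mxinnerZr mulrA expr2. Qed.

Lemma fnorm2B a b (A B : 'M[R]_(a, b)) :
  fnorm2 (A - B) = fnorm2 A - 2 * mxinner A B + fnorm2 B.
Proof. by rewrite fnorm2D mxinnerNr fnorm2N mulrN. Qed.

Lemma fnorm2D_le a b (A B : 'M[R]_(a, b)) : fnorm2 (A + B) <= 2 * fnorm2 A + 2 * fnorm2 B.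
Proof. have := fnorm2_ge0 (A - B); rewrite fnorm2B fnorm2D; lra. Qed.

Lemma fnorm2B_le a b (A B : 'M[R]_(a, b)) : fnorm2 (A - B) <= 2 * fnorm2 A + 2 * fnorm2 B.
Proof. by have := fnorm2D_le A (- B); rewrite fnorm2N. Qed.

Lemma fnorm2_subC a b (A B : 'M[R]_(a, b)) : fnorm2 (A - B) = fnorm2 (B - A).
Proof. by rewrite -opprB fnorm2N. Qed.

Lemma sqr_entry_le_fnorm2 a b (A : 'M[R]_(a, b)) i j : A i j ^+ 2 <= fnorm2 A.
Proof.
rewrite fnorm2E (bigD1 i) //= (bigD1 j) //= -addrA lerDl.
apply: addr_ge0; first by apply: sumr_ge0 => k _; exact: sqr_ge0.
by apply: sumr_ge0 => k _; apply: sumr_ge0 => l _; exact: sqr_ge0.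
Qed.

Lemma mxinner_injl a b (G G' : 'M[R]_(a, b)) :
  (forall D, mxinner G D = mxinner G' D) -> G = G'.
Proof.
move=> eqG; apply/matrixP => i j; apply/eqP; rewrite -subr_eq0 -sqrf_eq0.
have norm0 : fnorm2 (G - G') = 0 by rewrite /fnorm2 mxinnerBl eqG subrr.
have := sqr_entry_le_fnorm2 (G - G') i j; rewrite norm0 !mxE => le0.
by rewrite eq_le le0 sqr_ge0.
Qed.

Lemma entry_le_fnorm a b (A : 'M[R]_(a, b)) i j : `|A i j| <= fnorm A.
Proof. by rewrite -sqrtr_sqr fnormE ler_wsqrtr // sqr_entry_le_fnorm2. Qed.

Lemma cauchy_schwarz_sum p (f g : 'I_p -> R) :
  (\sum_i f i * g i) ^+ 2 <= (\sum_i f i ^+ 2) * (\sum_i g i ^+ 2).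
Proof.
set a := \sum_i f i ^+ 2; set b := \sum_i f i * g i; set c := \sum_i g i ^+ 2.
have a0 : 0 <= a by apply: sumr_ge0 => i _; exact: sqr_ge0.
have c0 : 0 <= c by apply: sumr_ge0 => i _; exact: sqr_ge0.
have quad_ge0 t : 0 <= a - 2 * t * b + t ^+ 2 * c.
  have -> : a - 2 * t * b + t ^+ 2 * c = \sum_i (f i - t * g i) ^+ 2.
    rewrite /a /b /c !mulr_sumr -sumrN -!big_split /=.
    by apply: eq_bigr => i _; ring.
  by apply: sumr_ge0 => i _; exact: sqr_ge0.
have [c_eq0|c_neq0] := eqVneq c 0.
  have g0 i : g i = 0.
    apply/eqP; rewrite -sqrf_eq0; apply/eqP.
    by apply: (psumr_eq0P (fun k _ => sqr_ge0 (g k)) c_eq0).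
  by rewrite /b big1 ?c_eq0 ?expr0n ?mulr0 // => i _; rewrite g0 mulr0.
have c_gt0 : 0 < c by rewrite lt_def c_neq0 c0.
(* the discriminant argument, evaluated at the minimiser t = b / c *)
have := quad_ge0 (b / c).
have -> : a - 2 * (b / c) * b + (b / c) ^+ 2 * c = (a * c - b ^+ 2) / c by field.
by rewrite pmulr_lge0 ?invr_gt0 // subr_ge0.
Qed.

Lemma fnorm2_mulmx_le a b p (A : 'M[R]_(a, p)) (B : 'M[R]_(p, b)) :
  fnorm2 (A *m B) <= fnorm2 A * fnorm2 B.
Proof.
have col_le j : \sum_k B k j ^+ 2 <= fnorm2 B.
  rewrite fnorm2E exchange_big /= (bigD1 j) //= lerDl.
  by apply: sumr_ge0 => l _; apply: sumr_ge0 => k _; exact: sqr_ge0.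
rewrite !fnorm2E big_distrl /=; apply: ler_sum => i _.
apply: (@le_trans _ _ (\sum_(j < b) (\sum_k A i k ^+ 2) * (\sum_k B k j ^+ 2))).
  apply: ler_sum => j _; rewrite mxE.
  exact: (cauchy_schwarz_sum (fun k => A i k) (fun k => B k j)).
rewrite -big_distrr /= ler_wpM2l //; first by apply: sumr_ge0 => k _; exact: sqr_ge0.
by rewrite exchange_big /= -fnorm2E.
Qed.

Lemma fnorm2_mulmx_lel a b p (A : 'M[R]_(a, p)) (B : 'M[R]_(p, b)) Bb :
  fnorm2 A <= Bb -> fnorm2 (A *m B) <= Bb * fnorm2 B.
Proof.
by move=> le_A; apply: le_trans (fnorm2_mulmx_le _ _) (ler_wpM2r (fnorm2_ge0 _) le_A).
Qed.

Lemma fnorm2_mulmx_ler a b p (A : 'M[R]_(a, p)) (B : 'M[R]_(p, b)) Bb :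
  fnorm2 B <= Bb -> fnorm2 (A *m B) <= fnorm2 A * Bb.
Proof.
by move=> le_B; apply: le_trans (fnorm2_mulmx_le _ _) (ler_wpM2l (fnorm2_ge0 _) le_B).
Qed.

End Frobenius.

Section QuadraticExpansion.
Variable R : realType.
Variables a b : nat.
Implicit Types (f g : 'M[R]_(a, b) -> R) (V G D : 'M[R]_(a, b)) (q : 'M[R]_(a, b) -> R).

Definition quad_exp f V G q :=
  forall D t, f (V + t *: D) = f V + t * mxinner G D + t ^+ 2 * q D.

Lemma quad_exp_grad f V G q : quad_exp f V G q -> is_grad f V G.
Proof.
move=> fq D.
have -> : (fun t => f (V + t *: D)) =
    cst (f V) + ( *%R^~ (mxinner G D)) + (fun t => t ^+ 2 * q D).
  by apply/funext => t; rewrite fq.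
apply: is_derive_eq.
by rewrite expr0n /= !(scale0r, scaler0, add0r, addr0); exact: mulr1.
Qed.

Lemma is_grad_unique f V G G' : is_grad f V G -> is_grad f V G' -> G = G'.
Proof.
move=> fG fG'; apply: mxinner_injl => D.
by rewrite -(@derive_val _ _ _ _ _ _ _ (fG D)) (@derive_val _ _ _ _ _ _ _ (fG' D)).
Qed.

Lemma quad_exp_gradE f V G G' q : quad_exp f V G q -> is_grad f V G' -> G' = G.
Proof. by move=> fq /is_grad_unique; apply; exact: quad_exp_grad. Qed.

Lemma argmin_quad_exp f V G q : quad_exp f V G q -> is_argmin f V -> G = 0.
Proof.
move=> fq Vmin; apply: mxinner_injl => D; rewrite mxinner0l.
set u := mxinner G D; set K := `|q D| + 1.
have K_gt0 : 0 < K by rewrite ltr_pwDr // normr_ge0.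
have step_ge0 t : 0 <= t * u + t ^+ 2 * q D.
  by have := Vmin (V + t *: D); rewrite fq -/u; lra.
(* the step [t = - u / K] is short enough for the linear term to dominate *)
have := step_ge0 (- u / K).
have -> : - u / K * u + (- u / K) ^+ 2 * q D = u ^+ 2 * (q D - K) / K ^+ 2.
  by field; rewrite gt_eqF.
rewrite pmulr_lge0 ?invr_gt0 ?exprn_gt0 // => ge0.
have qK : q D - K <= -1 by rewrite /K; have := ler_norm (q D); lra.
have u2_le0 : u ^+ 2 <= 0 by nra.
by apply/eqP; rewrite -sqrf_eq0 eq_le u2_le0 sqr_ge0.
Qed.

Lemma quad_exp1 f V G q D : quad_exp f V G q -> f (V + D) = f V + mxinner G D + q D.
Proof. by move=> fq; have := fq D 1; rewrite scale1r expr1n !mul1r. Qed.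

Lemma quad_expD f g V G1 G2 q1 q2 :
  quad_exp f V G1 q1 -> quad_exp g V G2 q2 ->
  quad_exp (fun W => f W + g W) V (G1 + G2) (fun D => q1 D + q2 D).
Proof. by move=> fq gq D t; rewrite fq gq mxinnerDl; ring. Qed.

Lemma quad_exp_shift f g V G q :
  (forall W, f W - g W = f V - g V) -> quad_exp g V G q -> quad_exp f V G q.
Proof.
move=> fg gq D t; have := fg (V + t *: D); rewrite gq => fgD.
have -> : f (V + t *: D) = (f V - g V) + (g V + t * mxinner G D + t ^+ 2 * q D).
  by rewrite -fgD; ring.
ring.
Qed.

Lemma quad_exp_congr f V G G' q q' :
  G = G' -> q =1 q' -> quad_exp f V G q -> quad_exp f V G' q'.
Proof. by move=> <- qq' fq D t; rewrite fq qq'. Qed.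

Lemma quad_exp_linear K V : quad_exp (fun W => mxinner W K) V K (fun=> 0).
Proof. by move=> D t; rewrite mxinnerDl mxinnerZl (mxinnerC K D); ring. Qed.

Lemma quad_exp_affine p1 p2 (M : 'M[R]_(a, b) -> 'M[R]_(p1, p2))
    (N : 'M[R]_(a, b) -> 'M[R]_(p1, p2)) (Nadj : 'M[R]_(p1, p2) -> 'M[R]_(a, b))
    (al : R) (z : 'M[R]_(p1, p2)) V :
  (forall D t, M (V + t *: D) = M V + t *: N D) ->
  (forall E D, mxinner E (N D) = mxinner (Nadj E) D) ->
  quad_exp (fun W => al / 2 * fnorm2 (M W) + mxinner z (M W)) V
    (Nadj (al *: M V + z)) (fun D => al / 2 * fnorm2 (N D)).
Proof.
move=> Maff adj D t; rewrite Maff fnorm2D fnorm2Z mxinnerDr !mxinnerZr -adj.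
by rewrite mxinnerDl mxinnerZl; field.
Qed.

End QuadraticExpansion.

Section BlockExpansions.
Variable R : realType.
Variables m n r s c : nat.
Variables (X : 'M[R]_(m, n)) (H : 'M[R]_(s, n)) (Y : 'M[R]_(c, n)) (P : adm_params R).

Local Notation st := (state R m n r s c).
Local Notation Lag := (Lag X H Y P).
Local Notation Ls := (Ls X H Y P).

Definition resid1 (T : st) := H - Qv T *m Uv T - E1 T.
Definition resid2 (T : st) := Y - Wv T *m Qv T *m Uv T - E2 T.

Definition gradU (T : st) := (Uv T - Om T *m X) - (Qv T)^T *m (mu P *: resid1 T + Z1 T)
   - (Wv T *m Qv T)^T *m (mu P *: resid2 T + Z2 T).
Definition gradQ (T : st) := del1 P *: Qv T - (mu P *: resid1 T + Z1 T) *m (Uv T)^T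
   - (Wv T)^T *m ((mu P *: resid2 T + Z2 T) *m (Uv T)^T).
Definition gradW (T : st) :=
  del2 P *: Wv T - (mu P *: resid2 T + Z2 T) *m (Uv T)^T *m (Qv T)^T.
Definition gradOm (T : st) := lam2 P *: Om T - (Uv T - Om T *m X) *m X^T.
Definition gradE1 (T : st) := rho1 P *: E1 T - (mu P *: resid1 T + Z1 T).
Definition gradE2 (T : st) := rho2 P *: E2 T - (mu P *: resid2 T + Z2 T).

Definition curvU (T : st) (D : 'M[R]_(r, n)) := 2^-1 * fnorm2 D
  + mu P / 2 * fnorm2 (Qv T *m D) + mu P / 2 * fnorm2 (Wv T *m Qv T *m D).
Definition curvQ (T : st) (D : 'M[R]_(s, r)) := mu P / 2 * fnorm2 (D *m Uv T)
  + mu P / 2 * fnorm2 (Wv T *m D *m Uv T) + del1 P / 2 * fnorm2 D.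
Definition curvW (T : st) (D : 'M[R]_(c, s)) :=
  mu P / 2 * fnorm2 (D *m Qv T *m Uv T) + del2 P / 2 * fnorm2 D.
Definition curvOm (T : st) (D : 'M[R]_(r, m)) :=
  2^-1 * fnorm2 (D *m X) + lam2 P / 2 * fnorm2 D.

Lemma LagE (T : st) : Lag T =
  2^-1 * fnorm2 (Uv T - Om T *m X) + lam1 P * l1norm (Uv T)
  + rho1 P / 2 * fnorm2 (E1 T) + rho2 P / 2 * fnorm2 (E2 T)
  + mxinner (Z1 T) (resid1 T) + mxinner (Z2 T) (resid2 T)
  + mu P / 2 * fnorm2 (resid1 T) + mu P / 2 * fnorm2 (resid2 T)
  + del1 P / 2 * fnorm2 (Qv T) + del2 P / 2 * fnorm2 (Wv T)
  + lam2 P / 2 * fnorm2 (Om T).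
Proof. by rewrite /Lag !sqr_fnorm. Qed.

Ltac mx_ring := apply/matrixP => i j; rewrite !mxE; ring.

Lemma quad_exp_LsU (T : st) :
  quad_exp (fun V => Ls (with_U T V)) (Uv T) (gradU T) (curvU T).
Proof.
pose M1 V := V - Om T *m X.
pose M2 V := H - Qv T *m V - E1 T.
pose M3 V := Y - Wv T *m Qv T *m V - E2 T.
have q1 := @quad_exp_affine _ _ _ _ _ M1 id id 1 0 (Uv T)
  (fun D t => ltac:(rewrite /M1; mx_ring)) (fun _ _ => erefl).
have q2 := @quad_exp_affine _ _ _ _ _ M2 (fun D => - (Qv T *m D))
  (fun G => - ((Qv T)^T *m G)) (mu P) (Z1 T) (Uv T)
  (fun D t => ltac:(rewrite /M2 mulmxDr -scalemxAr; mx_ring))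
  (fun G D => ltac:(by rewrite mxinnerNr mxinnerNl mxinner_mulmxl)).
have q3 := @quad_exp_affine _ _ _ _ _ M3 (fun D => - (Wv T *m Qv T *m D))
  (fun G => - ((Wv T *m Qv T)^T *m G)) (mu P) (Z2 T) (Uv T)
  (fun D t => ltac:(rewrite /M3 mulmxDr -scalemxAr; mx_ring))
  (fun G D => ltac:(by rewrite mxinnerNr mxinnerNl mxinner_mulmxl)).
apply: quad_exp_shift _ (quad_exp_congr _ _ (quad_expD (quad_expD q1 q2) q3)).
- by move=> W; rewrite /Ls !LagE /M1 /M2 /M3 /resid1 /resid2 /= !mxinner0l; field.
- by rewrite /gradU /M1 /resid1 /resid2 scale1r addr0.
- by move=> D; rewrite /curvU !fnorm2N; field.
Qed.

Lemma quad_exp_LagQ (T : st) :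
  quad_exp (fun V => Lag (with_Q T V)) (Qv T) (gradQ T) (curvQ T).
Proof.
pose M1 V := H - V *m Uv T - E1 T.
pose M2 V := Y - Wv T *m V *m Uv T - E2 T.
have q1 := @quad_exp_affine _ _ _ _ _ M1 (fun D => - (D *m Uv T))
  (fun G => - (G *m (Uv T)^T)) (mu P) (Z1 T) (Qv T)
  (fun D t => ltac:(rewrite /M1 mulmxDl -scalemxAl; mx_ring))
  (fun G D => ltac:(by rewrite mxinnerNr mxinnerNl mxinner_mulmxr)).
have q2 := @quad_exp_affine _ _ _ _ _ M2 (fun D => - (Wv T *m D *m Uv T))
  (fun G => - ((Wv T)^T *m (G *m (Uv T)^T))) (mu P) (Z2 T) (Qv T)
  (fun D t => ltac:(rewrite /M2 mulmxDr mulmxDl -scalemxAr -scalemxAl; mx_ring))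
  (fun G D => ltac:(by rewrite mxinnerNr mxinnerNl mxinner_mulmxr mxinner_mulmxl)).
have q3 := @quad_exp_affine _ _ _ _ _ id id id (del1 P) 0 (Qv T)
  (fun _ _ => erefl) (fun _ _ => erefl).
apply: quad_exp_shift _ (quad_exp_congr _ _ (quad_expD (quad_expD q1 q2) q3)).
- by move=> W; rewrite !LagE /M1 /M2 /resid1 /resid2 /= !mxinner0l; field.
- by rewrite /gradQ /M1 /M2 /resid1 /resid2 /= addr0; mx_ring.
- by move=> D; rewrite /curvQ !fnorm2N; field.
Qed.

Lemma quad_exp_LagW (T : st) :
  quad_exp (fun V => Lag (with_W T V)) (Wv T) (gradW T) (curvW T).
Proof.
pose M1 V := Y - V *m Qv T *m Uv T - E2 T.
have q1 := @quad_exp_affine _ _ _ _ _ M1 (fun D => - (D *m Qv T *m Uv T))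
  (fun G => - (G *m (Uv T)^T *m (Qv T)^T)) (mu P) (Z2 T) (Wv T)
  (fun D t => ltac:(rewrite /M1 !mulmxDl -!scalemxAl; mx_ring))
  (fun G D => ltac:(by rewrite mxinnerNr mxinnerNl !mxinner_mulmxr)).
have q2 := @quad_exp_affine _ _ _ _ _ id id id (del2 P) 0 (Wv T)
  (fun _ _ => erefl) (fun _ _ => erefl).
apply: quad_exp_shift _ (quad_exp_congr _ _ (quad_expD q1 q2)).
- by move=> W; rewrite !LagE /M1 /resid1 /resid2 /= !mxinner0l; field.
- by rewrite /gradW /M1 /resid2 /= addr0; mx_ring.
- by move=> D; rewrite /curvW !fnorm2N; field.
Qed.

Lemma quad_exp_LagOm (T : st) :
  quad_exp (fun V => Lag (with_Om T V)) (Om T) (gradOm T) (curvOm T).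
Proof.
pose M1 V := Uv T - V *m X.
have q1 := @quad_exp_affine _ _ _ _ _ M1 (fun D => - (D *m X))
  (fun G => - (G *m X^T)) 1 0 (Om T)
  (fun D t => ltac:(rewrite /M1 !mulmxDl -!scalemxAl; mx_ring))
  (fun G D => ltac:(by rewrite mxinnerNr mxinnerNl !mxinner_mulmxr)).
have q2 := @quad_exp_affine _ _ _ _ _ id id id (lam2 P) 0 (Om T)
  (fun _ _ => erefl) (fun _ _ => erefl).
apply: quad_exp_shift _ (quad_exp_congr _ _ (quad_expD q1 q2)).
- by move=> W; rewrite !LagE /M1 /resid1 /resid2 /= !mxinner0l; field.
- by rewrite /gradOm /M1 /= !addr0 scale1r; mx_ring.
- by move=> D; rewrite /curvOm !fnorm2N; field.
Qed.

Lemma quad_exp_LagE1 (T : st) : quad_exp (fun V => Lag (with_E1 T V)) (E1 T)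
  (gradE1 T) (fun D => (rho1 P + mu P) / 2 * fnorm2 D).
Proof.
pose M1 V := H - Qv T *m Uv T - V.
have q1 := @quad_exp_affine _ _ _ _ _ M1 (fun D => - D) (fun G => - G)
  (mu P) (Z1 T) (E1 T) (fun D t => ltac:(rewrite /M1; mx_ring))
  (fun G D => ltac:(by rewrite mxinnerNr mxinnerNl)).
have q2 := @quad_exp_affine _ _ _ _ _ id id id (rho1 P) 0 (E1 T)
  (fun _ _ => erefl) (fun _ _ => erefl).
apply: quad_exp_shift _ (quad_exp_congr _ _ (quad_expD q1 q2)).
- by move=> W; rewrite !LagE /M1 /resid1 /resid2 /= !mxinner0l; field.
- by rewrite /gradE1 /M1 /resid1 /= !addr0; mx_ring.
- by move=> D; rewrite !fnorm2N; field.
Qed.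

Lemma quad_exp_LagE2 (T : st) : quad_exp (fun V => Lag (with_E2 T V)) (E2 T)
  (gradE2 T) (fun D => (rho2 P + mu P) / 2 * fnorm2 D).
Proof.
pose M1 V := Y - Wv T *m Qv T *m Uv T - V.
have q1 := @quad_exp_affine _ _ _ _ _ M1 (fun D => - D) (fun G => - G)
  (mu P) (Z2 T) (E2 T) (fun D t => ltac:(rewrite /M1; mx_ring))
  (fun G D => ltac:(by rewrite mxinnerNr mxinnerNl)).
have q2 := @quad_exp_affine _ _ _ _ _ id id id (rho2 P) 0 (E2 T)
  (fun _ _ => erefl) (fun _ _ => erefl).
apply: quad_exp_shift _ (quad_exp_congr _ _ (quad_expD q1 q2)).
- by move=> W; rewrite !LagE /M1 /resid1 /resid2 /= !mxinner0l; field.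
- by rewrite /gradE2 /M1 /resid2 /= !addr0; mx_ring.
- by move=> D; rewrite !fnorm2N; field.
Qed.

Lemma quad_exp_LsZ1 (T : st) :
  quad_exp (fun V => Ls (with_Z1 T V)) (Z1 T) (resid1 T) (fun=> 0).
Proof.
apply: quad_exp_shift (quad_exp_linear (resid1 T) (Z1 T)) => W.
by rewrite /Ls !LagE /resid1 /resid2 /=; field.
Qed.

Lemma quad_exp_LsZ2 (T : st) :
  quad_exp (fun V => Ls (with_Z2 T V)) (Z2 T) (resid2 T) (fun=> 0).
Proof.
apply: quad_exp_shift (quad_exp_linear (resid2 T) (Z2 T)) => W.
by rewrite /Ls !LagE /resid1 /resid2 /=; field.
Qed.

Lemma quad_exp_Ls_of_Lag a b (upd : 'M[R]_(a, b) -> st) V G q :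
  (forall W, Uv (upd W) = Uv (upd V)) ->
  quad_exp (fun W => Lag (upd W)) V G q -> quad_exp (fun W => Ls (upd W)) V G q.
Proof. by move=> updU; apply: quad_exp_shift => W; rewrite /Ls updU; ring. Qed.

End BlockExpansions.

Section SoftThresholding.
Variable R : realType.

Definition l1sign a b (U S : 'M[R]_(a, b)) :=
  forall i j, `|S i j| <= 1 /\ S i j * U i j = `|U i j|.

Lemma l1sign_subgrad a b (U S : 'M[R]_(a, b)) :
  l1sign U S -> is_subgrad (@l1norm R a b) U S.
Proof.
move=> US V; rewrite mxinnerE /l1norm -big_split /=; apply: ler_sum => i _.
rewrite -big_split /=; apply: ler_sum => j _.
have [S1 SU] := US i j; rewrite !mxE mulrBr SU.
have : S i j * V i j <= `|V i j|.
  by apply: le_trans (ler_norm _) _; rewrite normrM; apply: ler_piMl.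
lra.
Qed.

Lemma l1norm_ge0 a b (U : 'M[R]_(a, b)) : 0 <= l1norm U.
Proof. by apply: sumr_ge0 => i _; apply: sumr_ge0. Qed.

Lemma soft_scalar_sign (t x : R) : 0 < t ->
  let y := Num.sg x * Num.max (`|x| - t) 0 in
  `|(x - y) / t| <= 1 /\ (x - y) / t * y = `|y|.
Proof.
move=> t_gt0 y.
have [xt|xt] := leP (`|x| - t) 0.
  have -> : y = 0 by rewrite /y max_r // mulr0.
  rewrite subr0 normr0 mulr0; split => //.
  rewrite normrM (@gtr0_norm _ t^-1) ?invr_gt0 // ler_pdivrMr // mul1r; lra.
have [x_gt0|x_lt0|x0] := ltrgt0P x.
- have nx : `|x| = x := gtr0_norm x_gt0.
  have ey : y = x - t by rewrite /y gtr0_sg // mul1r nx max_l // ltW // -nx.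
  have -> : (x - y) / t = 1 by rewrite ey; field; rewrite gt_eqF.
  by rewrite nx in xt; rewrite normr1 mul1r ey gtr0_norm.
- have nx : `|x| = - x := ltr0_norm x_lt0.
  have ey : y = x + t.
    by rewrite /y ltr0_sg // nx max_l; [ring | apply: ltW; rewrite -nx].
  have -> : (x - y) / t = -1 by rewrite ey; field; rewrite gt_eqF.
  rewrite normrN1 ey ltr0_norm; [split => //; ring | rewrite nx in xt; lra].
- by rewrite x0 normr0 in xt; lra.
Qed.

(* [soft (lam / A)] is the proximal map of [lam / A * l1norm]. *)
Lemma soft_step_l1sign a b (A lam : R) (U0 G : 'M[R]_(a, b)) : 0 < A -> 0 < lam ->
  let U1 := soft (lam / A) (U0 - A^-1 *: G) in
  exists S, l1sign U1 S /\ G + A *: (U1 - U0) = - (lam *: S).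
Proof.
move=> A_gt0 lam_gt0 U1; set W := U0 - A^-1 *: G.
exists ((A / lam) *: (W - U1)); split.
  move=> i j.
  have -> : ((A / lam) *: (W - U1)) i j = A / lam * (W i j - U1 i j).
    by rewrite !mxE.
  have -> : U1 i j = Num.sg (W i j) * Num.max (`|W i j| - lam / A) 0.
    by rewrite /U1 /soft mxE.
  move: (W i j) => w.
  have -> : A / lam * (w - Num.sg w * Num.max (`|w| - lam / A) 0)
      = (w - Num.sg w * Num.max (`|w| - lam / A) 0) / (lam / A).
    by field; rewrite !gt_eqF.
  exact: soft_scalar_sign (divr_gt0 lam_gt0 A_gt0).
rewrite scalerA mulrCA divff ?gt_eqF // mulr1 /W.
by apply/matrixP => i j; rewrite !mxE; field; rewrite gt_eqF.
Qed.

End SoftThresholding.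

Section Positivity.
Variable R : realType.
Variable P : adm_params R.
Hypothesis Ppos : params_pos P.

Lemma lam1_gt0 : 0 < lam1 P. Proof. by case: Ppos. Qed.
Lemma lam2_gt0 : 0 < lam2 P. Proof. by case: Ppos => _ []. Qed.
Lemma rho1_gt0 : 0 < rho1 P. Proof. by case: Ppos => _ [_ []]. Qed.
Lemma rho2_gt0 : 0 < rho2 P. Proof. by case: Ppos => _ [_ [_ []]]. Qed.
Lemma del1_gt0 : 0 < del1 P. Proof. by case: Ppos => _ [_ [_ [_ []]]]. Qed.
Lemma del2_gt0 : 0 < del2 P. Proof. by case: Ppos => _ [_ [_ [_ [_ []]]]]. Qed.
Lemma mu_gt0 : 0 < mu P. Proof. by case: Ppos => _ [_ [_ [_ [_ [_ ]]]]]. Qed.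

End Positivity.

Lemma half_weight_le (R : realFieldType) (k x S : R) :
  0 < k -> k / 2 * x <= S -> x <= 2 / k * S.
Proof.
move=> k_gt0 le_kx.
have -> : x = 2 / k * (k / 2 * x) by field; rewrite gt_eqF.
by apply: ler_wpM2l => //; apply: divr_ge0 => //; exact: ltW.
Qed.

Lemma one_add_mul_le (R : realFieldType) (l x S : R) :
  0 <= x -> 0 <= l -> 1 <= S -> l <= S -> 1 + l * x <= (1 + x) * S.
Proof. by move=> x0 l0 S1 lS; nra. Qed.

Section Coercivity.
Variable R : realType.
Variables m n r s c : nat.
Variables (X : 'M[R]_(m, n)) (H : 'M[R]_(s, n)) (Y : 'M[R]_(c, n)) (P : adm_params R).
Hypothesis Ppos : params_pos P.

Local Notation st := (state R m n r s c).
Local Notation Lag := (Lag X H Y P).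

(* Completing the square in the multiplier terms of [Lag] shows that
   [Lag_shift] dominates all the primal quadratic terms. *)
Definition Lag_shift (T : st) := Lag T + (fnorm2 (Z1 T) + fnorm2 (Z2 T)) / (2 * mu P).

Lemma mxinner_penalty_ge a b (Z E : 'M[R]_(a, b)) :
  - (fnorm2 Z / (2 * mu P)) <= mxinner Z E + mu P / 2 * fnorm2 E.
Proof.
have mu0 := mu_gt0 Ppos.
have := fnorm2_ge0 (E + (mu P)^-1 *: Z).
rewrite fnorm2D fnorm2Z mxinnerZr (mxinnerC E) => sq_ge0.
have : 0 <= mu P / 2 * (fnorm2 E + 2 * ((mu P)^-1 * mxinner Z E)
                          + (mu P)^-1 ^+ 2 * fnorm2 Z).
  by apply: mulr_ge0 => //; apply: divr_ge0 => //; exact: ltW.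
have -> : mu P / 2 * (fnorm2 E + 2 * ((mu P)^-1 * mxinner Z E) + (mu P)^-1 ^+ 2 * fnorm2 Z)
   = mxinner Z E + mu P / 2 * fnorm2 E + fnorm2 Z / (2 * mu P).
  by field; rewrite gt_eqF.
lra.
Qed.

Lemma primal_energy_le (T : st) :
  2^-1 * fnorm2 (Uv T - Om T *m X) + lam2 P / 2 * fnorm2 (Om T)
  + del1 P / 2 * fnorm2 (Qv T) + del2 P / 2 * fnorm2 (Wv T)
  + rho1 P / 2 * fnorm2 (E1 T) + rho2 P / 2 * fnorm2 (E2 T) <= Lag_shift T.
Proof.
rewrite /Lag_shift LagE mulrDl.
have := mxinner_penalty_ge (Z1 T) (resid1 H T).
have := mxinner_penalty_ge (Z2 T) (resid2 Y T).
have : 0 <= lam1 P * l1norm (Uv T).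
  by apply: mulr_ge0; [exact: ltW (lam1_gt0 Ppos) | exact: l1norm_ge0].
lra.
Qed.

Lemma Lag_shift_ge0 (T : st) : 0 <= Lag_shift T.
Proof.
apply: le_trans (primal_energy_le T).
have w a b k (A : 'M[R]_(a, b)) : 0 < k -> 0 <= k / 2 * fnorm2 A.
  by move=> k0; apply: mulr_ge0; [apply: divr_ge0 => //; exact: ltW | exact: fnorm2_ge0].
have := w _ _ _ (Uv T - Om T *m X) ltr01; have := w _ _ _ (Om T) (lam2_gt0 Ppos).
have := w _ _ _ (Qv T) (del1_gt0 Ppos); have := w _ _ _ (Wv T) (del2_gt0 Ppos).
have := w _ _ _ (E1 T) (rho1_gt0 Ppos); have := w _ _ _ (E2 T) (rho2_gt0 Ppos).
rewrite div1r; lra.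
Qed.

Definition inv_weight_sum :=
  1 + (lam2 P)^-1 + (del1 P)^-1 + (del2 P)^-1 + (rho1 P)^-1 + (rho2 P)^-1.

Definition coerc_const := 4 * (1 + fnorm2 X) * inv_weight_sum.

Definition block_bound (B Mz : R) := coerc_const * (B + Mz / mu P).

Lemma inv_weights_gt0 :
  [/\ 0 < (lam2 P)^-1, 0 < (del1 P)^-1, 0 < (del2 P)^-1, 0 < (rho1 P)^-1
    & 0 < (rho2 P)^-1].
Proof.
by rewrite !invr_gt0 (lam2_gt0 Ppos) (del1_gt0 Ppos) (del2_gt0 Ppos)
   (rho1_gt0 Ppos) (rho2_gt0 Ppos).
Qed.

Lemma inv_weight_sum_ge :
  [/\ 1 <= inv_weight_sum, (lam2 P)^-1 <= inv_weight_sum, (del1 P)^-1 <= inv_weight_sum,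
      (del2 P)^-1 <= inv_weight_sum &
      ((rho1 P)^-1 <= inv_weight_sum /\ (rho2 P)^-1 <= inv_weight_sum)].
Proof.
have [l d1 d2 r1 r2] := inv_weights_gt0.
by rewrite /inv_weight_sum; repeat split; lra.
Qed.

Lemma coerc_const_ge0 : 0 <= coerc_const.
Proof.
have [w1 _ _ _ _] := inv_weight_sum_ge.
have X0 := fnorm2_ge0 X.
by rewrite /coerc_const; apply: mulr_ge0; [apply: mulr_ge0 => //; lra | lra].
Qed.

Lemma fnorm2_blocks_le_Lag_shift (T : st) (S := coerc_const * Lag_shift T) :
  fnorm2 (Om T) <= S /\ fnorm2 (Uv T) <= S /\ fnorm2 (Qv T) <= S /\
  fnorm2 (Wv T) <= S /\ fnorm2 (E1 T) <= S /\ fnorm2 (E2 T) <= S.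
Proof.
have S0 := Lag_shift_ge0 T; have X0 := fnorm2_ge0 X.
have [w1 wl wd1 wd2 [wr1 wr2]] := inv_weight_sum_ge.
have c4 : 4 * inv_weight_sum <= coerc_const.
  rewrite /coerc_const -mulrA ler_pM2l // ler_peMl //; lra.
have block a b k (A : 'M[R]_(a, b)) : 0 < k -> k / 2 * fnorm2 A <= Lag_shift T ->
    k^-1 <= inv_weight_sum -> fnorm2 A <= S.
  move=> k0 /(half_weight_le k0) le_A k_le; apply: le_trans le_A _.
  by apply: ler_wpM2r => //; lra.
have nn a b k (A : 'M[R]_(a, b)) : 0 < k -> 0 <= k / 2 * fnorm2 A.
  by move=> k0; apply: mulr_ge0; [apply: divr_ge0 => //; exact: ltW | exact: fnorm2_ge0].
have l2 := lam2_gt0 Ppos; have d1 := del1_gt0 Ppos; have d2 := del2_gt0 Ppos.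
have r1 := rho1_gt0 Ppos; have r2 := rho2_gt0 Ppos.
have energy := primal_energy_le T.
have := nn _ _ _ (Uv T - Om T *m X) ltr01; have := nn _ _ _ (Om T) l2.
have := nn _ _ _ (Qv T) d1; have := nn _ _ _ (Wv T) d2.
have := nn _ _ _ (E1 T) r1; have := nn _ _ _ (E2 T) r2.
rewrite div1r => n6 n5 n4 n3 n2 n1.
have bOm : fnorm2 (Om T) <= 2 / lam2 P * Lag_shift T by apply: half_weight_le; lra.
have bUX : fnorm2 (Uv T - Om T *m X) <= 2 * Lag_shift T by lra.
split; first by apply: (block _ _ _ _ l2) wl; lra.
split.
  have UX : fnorm2 (Uv T) <= 2 * fnorm2 (Uv T - Om T *m X) + 2 * fnorm2 (Om T *m X).
    by have := fnorm2D_le (Uv T - Om T *m X) (Om T *m X); rewrite subrK.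
  have OX : fnorm2 (Om T *m X) <= 2 / lam2 P * Lag_shift T * fnorm2 X.
    by apply: le_trans (fnorm2_mulmx_le _ _) _; apply: ler_wpM2r.
  have K : 1 + (lam2 P)^-1 * fnorm2 X <= (1 + fnorm2 X) * inv_weight_sum.
    by apply: one_add_mul_le => //; rewrite invr_ge0 ltW.
  have : 4 * (1 + (lam2 P)^-1 * fnorm2 X) * Lag_shift T <= S.
    by apply: ler_wpM2r => //; rewrite /coerc_const -mulrA ler_pM2l.
  lra.
split; first by apply: (block _ _ _ _ d1) wd1; lra.
split; first by apply: (block _ _ _ _ d2) wd2; lra.
split; first by apply: (block _ _ _ _ r1) wr1; lra.
by apply: (block _ _ _ _ r2) wr2; lra.
Qed.

Lemma fnorm2_blocks_le (T : st) B Mz (Bb := block_bound B Mz) :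
  Lag T <= B -> fnorm2 (Z1 T) <= Mz -> fnorm2 (Z2 T) <= Mz ->
  fnorm2 (Om T) <= Bb /\ fnorm2 (Uv T) <= Bb /\ fnorm2 (Qv T) <= Bb /\
  fnorm2 (Wv T) <= Bb /\ fnorm2 (E1 T) <= Bb /\ fnorm2 (E2 T) <= Bb.
Proof.
move=> LB Z1B Z2B.
have mu0 := mu_gt0 Ppos.
have Zle : (fnorm2 (Z1 T) + fnorm2 (Z2 T)) / (2 * mu P) <= Mz / mu P.
  by rewrite invfM mulrA ler_pM2r ?invr_gt0 //; lra.
have : Lag_shift T <= B + Mz / mu P by rewrite /Lag_shift; lra.
move/(ler_wpM2l coerc_const_ge0) => le_Bb.
have [bO [bU [bQ [bW [bE1 bE2]]]]] := fnorm2_blocks_le_Lag_shift T.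
by do ![split; first exact: le_trans le_Bb]; exact: le_trans le_Bb.
Qed.

End Coercivity.

Section Descent.
Variable R : realType.

Lemma quad_exp_grad_step_le a b (f : 'M[R]_(a, b) -> R) V V1 G q (A K : R) :
  quad_exp f V G q -> (forall D, q D <= K * fnorm2 D) ->
  G = - (A *: (V1 - V)) -> K + 1 <= A -> f V1 + fnorm2 (V1 - V) <= f V.
Proof.
move=> fq qK GA KA; have := quad_exp1 (V1 - V) fq; rewrite (addrC V) subrK => ->.
rewrite GA mxinnerNl mxinnerZl -/(fnorm2 _).
have := qK (V1 - V); have := fnorm2_ge0 (V1 - V); nra.
Qed.

Lemma quad_exp_argmin_eq a b (f : 'M[R]_(a, b) -> R) V V1 q :
  quad_exp f V1 0 q -> f V1 + q (V - V1) = f V.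
Proof.
move=> fq; have := quad_exp1 (V - V1) fq.
by rewrite (addrC V1) subrK mxinner0l addr0 => ->.
Qed.

End Descent.

Section BlockDescent.
Variable R : realType.
Variables m n r s c : nat.
Variables (X : 'M[R]_(m, n)) (H : 'M[R]_(s, n)) (Y : 'M[R]_(c, n)) (P : adm_params R).
Hypothesis Ppos : params_pos P.

Local Notation st := (state R m n r s c).
Local Notation Lag := (Lag X H Y P).
Local Notation Ls := (Ls X H Y P).

(* A bound on the curvature of [Lag] in the U, Q and W blocks when the other
   blocks have squared norm at most [Bb]. *)
Definition lip_const (Bb : R) := 1 + del1 P + del2 P + mu P * Bb + mu P * Bb ^+ 2.

Lemma lip_const_ge1 Bb : 0 <= Bb -> 1 <= lip_const Bb.
Proof.
move=> B0; have := del1_gt0 Ppos; have := del2_gt0 Ppos; have := mu_gt0 Ppos.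
have := sqr_ge0 Bb; rewrite /lip_const; nra.
Qed.

Lemma step_size_gt0 Bb eta : 0 <= Bb -> lip_const Bb + 1 <= mu P * eta -> 0 < eta.
Proof.
move=> B0 Keta; rewrite -(pmulr_rgt0 _ (mu_gt0 Ppos)).
by have := lip_const_ge1 B0; lra.
Qed.

Lemma curv_le_lip_const (Bb x y d del : R) : 0 <= Bb -> 0 <= d -> 0 <= del ->
  del <= 1 + del1 P + del2 P -> x <= Bb * d -> y <= Bb * (Bb * d) ->
  mu P / 2 * x + mu P / 2 * y + del / 2 * d <= lip_const Bb * d.
Proof.
move=> B0 d0 del0 del_le xd yd; have mu0 := mu_gt0 Ppos.
have mx : mu P * x <= mu P * Bb * d by rewrite -mulrA ler_wpM2l // ltW.
have my : mu P * y <= mu P * Bb ^+ 2 * d by rewrite expr2 -!mulrA ler_wpM2l // ltW.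
have : del * d <= (1 + del1 P + del2 P) * d by exact: ler_wpM2r.
have : 0 <= mu P * Bb * d by rewrite !mulr_ge0 // ltW.
have : 0 <= mu P * Bb ^+ 2 * d by rewrite !mulr_ge0 // ?sqr_ge0 // ltW.
have : 0 <= (1 + del1 P + del2 P) * d.
  by rewrite mulr_ge0 // !addr_ge0 // ltW ?del1_gt0 ?del2_gt0.
rewrite /lip_const !mulrDl; lra.
Qed.

Lemma curvU_le (T : st) Bb D : fnorm2 (Qv T) <= Bb -> fnorm2 (Wv T) <= Bb ->
  curvU P T D <= lip_const Bb * fnorm2 D.
Proof.
move=> QB WB; have B0 := le_trans (fnorm2_ge0 _) QB.
have QD := fnorm2_mulmx_lel D QB.
have WQD : fnorm2 (Wv T *m Qv T *m D) <= Bb * (Bb * fnorm2 D).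
  by rewrite -mulmxA; apply: le_trans (fnorm2_mulmx_lel _ WB) (ler_wpM2l B0 QD).
have dd : 1 <= 1 + del1 P + del2 P.
  by rewrite -addrA lerDl addr_ge0 // ltW ?del1_gt0 ?del2_gt0.
have := curv_le_lip_const B0 (fnorm2_ge0 D) ler01 dd QD WQD.
rewrite /curvU; lra.
Qed.

Lemma curvQ_le (T : st) Bb D : fnorm2 (Uv T) <= Bb -> fnorm2 (Wv T) <= Bb ->
  curvQ P T D <= lip_const Bb * fnorm2 D.
Proof.
move=> UB WB; have B0 := le_trans (fnorm2_ge0 _) UB.
have DU : fnorm2 (D *m Uv T) <= Bb * fnorm2 D by rewrite mulrC; exact: fnorm2_mulmx_ler.
have WDU : fnorm2 (Wv T *m D *m Uv T) <= Bb * (Bb * fnorm2 D).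
  apply: le_trans (fnorm2_mulmx_ler _ UB) _; rewrite [leLHS]mulrC.
  by apply: ler_wpM2l => //; exact: fnorm2_mulmx_lel.
have d0 : 0 <= del1 P by rewrite ltW ?del1_gt0.
have dd : del1 P <= 1 + del1 P + del2 P by have := del2_gt0 Ppos; lra.
have := curv_le_lip_const B0 (fnorm2_ge0 D) d0 dd DU WDU.
rewrite /curvQ; lra.
Qed.

Lemma curvW_le (T : st) Bb D : fnorm2 (Qv T) <= Bb -> fnorm2 (Uv T) <= Bb ->
  curvW P T D <= lip_const Bb * fnorm2 D.
Proof.
move=> QB UB; have B0 := le_trans (fnorm2_ge0 _) QB.
have DQU : fnorm2 (D *m Qv T *m Uv T) <= Bb * (Bb * fnorm2 D).
  apply: le_trans (fnorm2_mulmx_ler _ UB) _; rewrite [leLHS]mulrC.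
  by apply: ler_wpM2l => //; rewrite mulrC; exact: fnorm2_mulmx_ler.
have d0 : 0 <= del2 P by rewrite ltW ?del2_gt0.
have dd : del2 P <= 1 + del1 P + del2 P by have := del1_gt0 Ppos; lra.
have := curv_le_lip_const B0 (fnorm2_ge0 D) d0 dd (mulr_ge0 B0 (fnorm2_ge0 D)) DQU.
rewrite /curvW mulr0 add0r; lra.
Qed.

Lemma Lag_U_descent (T : st) U1 S (A Bb : R) :
  l1sign U1 S -> gradU X H Y P T + A *: (U1 - Uv T) = - (lam1 P *: S) ->
  fnorm2 (Qv T) <= Bb -> fnorm2 (Wv T) <= Bb -> lip_const Bb + 1 <= A ->
  Lag (with_U T U1) + fnorm2 (U1 - Uv T) <= Lag T.
Proof.
move=> U1S opt QB WB KA; set D := U1 - Uv T.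
have expU := quad_exp1 D (quad_exp_LsU X H Y P T).
rewrite (addrC (Uv T)) subrK in expU.
have gradD : mxinner (gradU X H Y P T) D = - (lam1 P * mxinner S D) - A * fnorm2 D.
  have -> : gradU X H Y P T = - (lam1 P *: S) - A *: D by rewrite -opt addrK.
  by rewrite mxinnerBl mxinnerNl !mxinnerZl.
have sub := l1sign_subgrad U1S (Uv T).
rewrite -opprB -/D mxinnerNr in sub.
have l1_dec : lam1 P * (l1norm U1 - mxinner S D) <= lam1 P * l1norm (Uv T).
  by apply: ler_wpM2l; [exact: ltW (lam1_gt0 Ppos) | lra].
have curv := curvU_le D QB WB.
have KAD : (lip_const Bb + 1) * fnorm2 D <= A * fnorm2 D.
  by apply: ler_wpM2r => //; exact: fnorm2_ge0.
have -> : Lag T = Ls (with_U T (Uv T)) + lam1 P * l1norm (Uv T).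
  by rewrite /Ls; case: (T) => * /=; ring.
have -> : Lag (with_U T U1) = Ls (with_U T U1) + lam1 P * l1norm U1 by rewrite /Ls; ring.
rewrite expU gradD; lra.
Qed.

Lemma Lag_Q_descent (T : st) Q1 (A Bb : R) :
  gradQ H Y P T = - (A *: (Q1 - Qv T)) ->
  fnorm2 (Uv T) <= Bb -> fnorm2 (Wv T) <= Bb -> lip_const Bb + 1 <= A ->
  Lag (with_Q T Q1) + fnorm2 (Q1 - Qv T) <= Lag T.
Proof.
move=> opt UB WB KA; have -> : Lag T = Lag (with_Q T (Qv T)) by case: (T).
exact: quad_exp_grad_step_le (quad_exp_LagQ X H Y P T) (fun D => curvQ_le D UB WB) opt KA.
Qed.

Lemma Lag_W_descent (T : st) W1 (A Bb : R) :
  gradW Y P T = - (A *: (W1 - Wv T)) ->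
  fnorm2 (Qv T) <= Bb -> fnorm2 (Uv T) <= Bb -> lip_const Bb + 1 <= A ->
  Lag (with_W T W1) + fnorm2 (W1 - Wv T) <= Lag T.
Proof.
move=> opt QB UB KA; have -> : Lag T = Lag (with_W T (Wv T)) by case: (T).
exact: quad_exp_grad_step_le (quad_exp_LagW X H Y P T) (fun D => curvW_le D QB UB) opt KA.
Qed.

Lemma with_Om_id (T : st) : with_Om T (Om T) = T. Proof. by case: T. Qed.
Lemma with_E1_id (T : st) : with_E1 T (E1 T) = T. Proof. by case: T. Qed.
Lemma with_E2_id (T : st) : with_E2 T (E2 T) = T. Proof. by case: T. Qed.

Lemma Lag_Om_descent (T : st) Om1 :
  gradOm X P (with_Om T Om1) = 0 ->
  Lag (with_Om T Om1) + lam2 P / 2 * fnorm2 (Om1 - Om T) <= Lag T.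
Proof.
move=> opt.
have fq : quad_exp (fun V => Lag (with_Om T V)) Om1 0 (curvOm X P (with_Om T Om1)).
  by have := quad_exp_LagOm X H Y P (with_Om T Om1); rewrite opt.
have := quad_exp_argmin_eq (Om T) fq; rewrite /= with_Om_id => <-.
by rewrite lerD2l /curvOm fnorm2_subC lerDr mulr_ge0 ?fnorm2_ge0.
Qed.

Lemma Lag_E1_descent (T : st) E :
  gradE1 H P (with_E1 T E) = 0 ->
  Lag (with_E1 T E) + (rho1 P + mu P) / 2 * fnorm2 (E - E1 T) = Lag T.
Proof.
move=> opt.
have fq : quad_exp (fun V => Lag (with_E1 T V)) E 0
    (fun D => (rho1 P + mu P) / 2 * fnorm2 D).
  by have := quad_exp_LagE1 X H Y P (with_E1 T E); rewrite opt.
by have := quad_exp_argmin_eq (E1 T) fq; rewrite /= with_E1_id fnorm2_subC.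
Qed.

Lemma Lag_E2_descent (T : st) E :
  gradE2 Y P (with_E2 T E) = 0 ->
  Lag (with_E2 T E) + (rho2 P + mu P) / 2 * fnorm2 (E - E2 T) = Lag T.
Proof.
move=> opt.
have fq : quad_exp (fun V => Lag (with_E2 T V)) E 0
    (fun D => (rho2 P + mu P) / 2 * fnorm2 D).
  by have := quad_exp_LagE2 X H Y P (with_E2 T E); rewrite opt.
by have := quad_exp_argmin_eq (E2 T) fq; rewrite /= with_E2_id fnorm2_subC.
Qed.

End BlockDescent.

Lemma grad_step_gradE (R : fieldType) a b (V V1 G : 'M[R]_(a, b)) (A : R) :
  A != 0 -> V1 = V - A^-1 *: G -> G = - (A *: (V1 - V)).
Proof. by move=> A0 ->; rewrite addrC addKr scalerN opprK scalerA divff // scale1r. Qed.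

Section OneStep.
Variable R : realType.
Variables m n r s c : nat.
Variables (X : 'M[R]_(m, n)) (H : 'M[R]_(s, n)) (Y : 'M[R]_(c, n)) (P : adm_params R).
Hypothesis Ppos : params_pos P.

Local Notation st := (state R m n r s c).
Local Notation Lag := (Lag X H Y P).
Local Notation step := (adm_step X H Y P).

Definition step_decrease (T T' : st) :=
  fnorm2 (Uv T' - Uv T) + fnorm2 (Qv T' - Qv T) + fnorm2 (Wv T' - Wv T)
  + lam2 P / 2 * fnorm2 (Om T' - Om T) + (rho1 P + mu P) / 2 * fnorm2 (E1 T' - E1 T)
  + (rho2 P + mu P) / 2 * fnorm2 (E2 T' - E2 T).

Lemma step_decrease_ge0 (T T' : st) : 0 <= step_decrease T T'.
Proof.
have mu0 := mu_gt0 Ppos; have l2 := lam2_gt0 Ppos.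
have r1 := rho1_gt0 Ppos; have r2 := rho2_gt0 Ppos.
have w a b k (A : 'M[R]_(a, b)) : 0 < k -> 0 <= k / 2 * fnorm2 A.
  by move=> k0; rewrite mulr_ge0 ?divr_ge0 ?fnorm2_ge0 // ltW.
have := w _ _ _ (Om T' - Om T) l2.
have := w _ _ _ (E1 T' - E1 T) (addr_gt0 r1 mu0); have := w _ _ _ (E2 T' - E2 T) (addr_gt0 r2 mu0).
have := fnorm2_ge0 (Uv T' - Uv T); have := fnorm2_ge0 (Qv T' - Qv T).
have := fnorm2_ge0 (Wv T' - Wv T); rewrite /step_decrease; lra.
Qed.

Lemma Lag_dual_update (T : st) Z1' Z2' :
  Z1' - Z1 T = mu P *: resid1 H T -> Z2' - Z2 T = mu P *: resid2 Y T ->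
  Lag (with_Z2 (with_Z1 T Z1') Z2') =
    Lag T + (fnorm2 (Z1' - Z1 T) + fnorm2 (Z2' - Z2 T)) / mu P.
Proof.
move=> dZ1 dZ2; have mu0 := mu_gt0 Ppos.
have -> : Lag (with_Z2 (with_Z1 T Z1') Z2') =
    Lag T + mxinner (Z1' - Z1 T) (resid1 H T) + mxinner (Z2' - Z2 T) (resid2 Y T).
  by rewrite !LagE /= !mxinnerBl; ring.
by rewrite dZ1 dZ2 !fnorm2Z !mxinnerZl /fnorm2; field; rewrite gt_eqF.
Qed.

Lemma adm_step_optimality (Tk Tk1 : st) etaU etaQ etaW :
  0 < etaU -> 0 < etaQ -> 0 < etaW -> step etaU etaQ etaW Tk Tk1 ->
  [/\ Z1 Tk1 = rho1 P *: E1 Tk1 /\ Z2 Tk1 = rho2 P *: E2 Tk1,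
      Z1 Tk1 - Z1 Tk = mu P *: resid1 H Tk1 /\ Z2 Tk1 - Z2 Tk = mu P *: resid2 Y Tk1,
      gradOm X P Tk1 = 0,
      gradQ H Y P (with_U Tk (Uv Tk1)) = - ((mu P * etaQ) *: (Qv Tk1 - Qv Tk)) /\
      gradW Y P (with_Q (with_U Tk (Uv Tk1)) (Qv Tk1))
        = - ((mu P * etaW) *: (Wv Tk1 - Wv Tk)) &
      exists S, l1sign (Uv Tk1) S /\
        gradU X H Y P Tk + (mu P * etaU) *: (Uv Tk1 - Uv Tk) = - (lam1 P *: S)].
Proof.
move=> etaU0 etaQ0 etaW0.
case=> [[GU [gU U1E]] [[GQ [gQ Q1E]] [[GW [gW W1E]] [mOm [mE1 [mE2 [Z1E Z2E]]]]]]].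
have mu0 := mu_gt0 Ppos.
have dZ1 : Z1 Tk1 - Z1 Tk = mu P *: resid1 H Tk1 by rewrite Z1E addrC addKr.
have dZ2 : Z2 Tk1 - Z2 Tk = mu P *: resid2 Y Tk1 by rewrite Z2E addrC addKr.
split => //.
- have gE1 : rho1 P *: E1 Tk1 = mu P *: resid1 H Tk1 + Z1 Tk.
    have := argmin_quad_exp (quad_exp_LagE1 X H Y P _) mE1.
    by rewrite /gradE1 => /eqP; rewrite subr_eq0 => /eqP.
  have gE2 : rho2 P *: E2 Tk1 = mu P *: resid2 Y Tk1 + Z2 Tk.
    have := argmin_quad_exp (quad_exp_LagE2 X H Y P _) mE2.
    by rewrite /gradE2 => /eqP; rewrite subr_eq0 => /eqP.
  by rewrite gE1 gE2 Z1E Z2E !(addrC (Z1 Tk)) !(addrC (Z2 Tk)).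
- exact: argmin_quad_exp (quad_exp_LagOm X H Y P _) mOm.
- split; apply: grad_step_gradE; rewrite ?mulf_neq0 ?gt_eqF //.
    by rewrite -(quad_exp_gradE (quad_exp_LagQ X H Y P _) gQ).
  by rewrite -(quad_exp_gradE (quad_exp_LagW X H Y P _) gW).
- rewrite (quad_exp_gradE (quad_exp_LsU X H Y P Tk) gU) in U1E.
  by rewrite U1E; exact: soft_step_l1sign (mulr_gt0 mu0 etaU0) (lam1_gt0 Ppos).
Qed.

Lemma adm_step_primal_descent (Tk Tk1 : st) etaU etaQ etaW B Mz Bm :
  step etaU etaQ etaW Tk Tk1 ->
  Lag Tk <= B -> fnorm2 (Z1 Tk) <= Mz -> fnorm2 (Z2 Tk) <= Mz ->
  block_bound X P B Mz <= Bm -> lip_const P Bm + 1 <= mu P * etaU ->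
  lip_const P Bm + 1 <= mu P * etaQ -> lip_const P Bm + 1 <= mu P * etaW ->
  Lag (with_Z2 (with_Z1 Tk1 (Z1 Tk)) (Z2 Tk)) + step_decrease Tk Tk1 <= Lag Tk.
Proof.
move=> stp LB Z1B Z2B BbBm KU KQ KW; have mu0 := mu_gt0 Ppos.
have blocks (T : st) : Lag T <= B -> Z1 T = Z1 Tk -> Z2 T = Z2 Tk ->
    fnorm2 (Om T) <= Bm /\ fnorm2 (Uv T) <= Bm /\ fnorm2 (Qv T) <= Bm /\
    fnorm2 (Wv T) <= Bm /\ fnorm2 (E1 T) <= Bm /\ fnorm2 (E2 T) <= Bm.
  move=> LTB eZ1 eZ2; rewrite -eZ1 -eZ2 in Z1B Z2B.
  have [bOm [bU [bQ [bW [bE1 bE2]]]]] := fnorm2_blocks_le Ppos LTB Z1B Z2B.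
  by do ![split; first exact: le_trans BbBm]; exact: le_trans BbBm.
have [bOm0 [_ [bQ0 [bW0 _]]]] := blocks Tk LB erefl erefl.
have Bm0 := le_trans (fnorm2_ge0 _) bOm0.
have [_ _ gOm [gQ gW] [S [US gU]]] := adm_step_optimality
  (step_size_gt0 Ppos Bm0 KU) (step_size_gt0 Ppos Bm0 KQ) (step_size_gt0 Ppos Bm0 KW) stp.
have [_ [_ [_ [_ [mE1 [mE2 _]]]]]] := stp.
set T1 := with_U Tk (Uv Tk1); set T2 := with_Q T1 (Qv Tk1).
set T3 := with_W T2 (Wv Tk1); set T4 := with_Om T3 (Om Tk1).
set T5 := with_E1 T4 (E1 Tk1).
have le_B (T T' : st) d : 0 <= d -> Lag T' + d <= Lag T -> Lag T <= B -> Lag T' <= B.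
  by move=> *; lra.
have dU : Lag T1 + fnorm2 (Uv Tk1 - Uv Tk) <= Lag Tk :=
  Lag_U_descent Ppos US gU bQ0 bW0 KU.
have L1B := le_B _ _ _ (fnorm2_ge0 _) dU LB.
have [_ [bU1 [_ [bW1 _]]]] := blocks T1 L1B erefl erefl.
have dQ : Lag T2 + fnorm2 (Qv Tk1 - Qv Tk) <= Lag T1 :=
  Lag_Q_descent X Ppos gQ bU1 bW1 KQ.
have [_ [bU2 [bQ2 _]]] := blocks T2 (le_B _ _ _ (fnorm2_ge0 _) dQ L1B) erefl erefl.
have dW : Lag T3 + fnorm2 (Wv Tk1 - Wv Tk) <= Lag T2 :=
  Lag_W_descent X H Ppos gW bQ2 bU2 KW.
have dOm : Lag T4 + lam2 P / 2 * fnorm2 (Om Tk1 - Om Tk) <= Lag T3 :=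
  Lag_Om_descent (T := T3) H Y gOm.
have dE1 : Lag T5 + (rho1 P + mu P) / 2 * fnorm2 (E1 Tk1 - E1 Tk) = Lag T4.
  exact: Lag_E1_descent (argmin_quad_exp (quad_exp_LagE1 X H Y P _) mE1).
have dE2 : Lag (with_Z2 (with_Z1 Tk1 (Z1 Tk)) (Z2 Tk))
    + (rho2 P + mu P) / 2 * fnorm2 (E2 Tk1 - E2 Tk) = Lag T5.
  exact: Lag_E2_descent (argmin_quad_exp (quad_exp_LagE2 X H Y P _) mE2).
rewrite /step_decrease; lra.
Qed.

Lemma adm_step_descent (Tk Tk1 : st) etaU etaQ etaW B Mz Bm :
  step etaU etaQ etaW Tk Tk1 ->
  Lag Tk <= B -> fnorm2 (Z1 Tk) <= Mz -> fnorm2 (Z2 Tk) <= Mz ->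
  block_bound X P B Mz <= Bm -> lip_const P Bm + 1 <= mu P * etaU ->
  lip_const P Bm + 1 <= mu P * etaQ -> lip_const P Bm + 1 <= mu P * etaW ->
  [/\ Lag Tk1 + step_decrease Tk Tk1
        <= Lag Tk + (fnorm2 (Z1 Tk1 - Z1 Tk) + fnorm2 (Z2 Tk1 - Z2 Tk)) / mu P,
      fnorm2 (E1 Tk1) <= block_bound X P B Mz & fnorm2 (E2 Tk1) <= block_bound X P B Mz].
Proof.
move=> stp LB Z1B Z2B BbBm KU KQ KW.
have primal := adm_step_primal_descent stp LB Z1B Z2B BbBm KU KQ KW.
set T6 := with_Z2 (with_Z1 Tk1 (Z1 Tk)) (Z2 Tk) in primal.
have L6B : Lag T6 <= B by have := step_decrease_ge0 Tk Tk1; lra.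
have [_ [_ [_ [_ [bE1 bE2]]]]] := fnorm2_blocks_le Ppos L6B Z1B Z2B.
split => //.
have Bm0 : 0 <= Bm by apply: le_trans BbBm; exact: le_trans (fnorm2_ge0 _) bE1.
have [_ [dZ1 dZ2] _ _ _] := adm_step_optimality
  (step_size_gt0 Ppos Bm0 KU) (step_size_gt0 Ppos Bm0 KQ) (step_size_gt0 Ppos Bm0 KW) stp.
have -> : Lag Tk1 = Lag T6 + (fnorm2 (Z1 Tk1 - Z1 Tk) + fnorm2 (Z2 Tk1 - Z2 Tk)) / mu P.
  by rewrite -(Lag_dual_update (T := T6) dZ1 dZ2) /T6; case: (Tk1).
lra.
Qed.

End OneStep.

Import numFieldNormedType.Exports.
Local Open Scope classical_set_scope.

Section RealSequences.
Variable R : realType.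
Implicit Types (u v : nat -> R) (f g : nat -> nat) (a C : R).

Lemma incr_comp f g : (forall k, f k < f k.+1)%N -> (forall k, g k < g k.+1)%N ->
  forall k, (f (g k) < f (g k.+1))%N.
Proof. by move=> fi gi k; apply: (homo_ltn ltn_trans fi); exact: gi. Qed.

Lemma incr_ge f : (forall k, f k < f k.+1)%N -> forall k, (k <= f k)%N.
Proof. by move=> fi; elim => // k ih; exact: leq_ltn_trans ih (fi k). Qed.

Lemma cvg_subseq u a f : u @ \oo --> a -> (forall k, f k < f k.+1)%N ->
  (fun k => u (f k)) @ \oo --> a.
Proof.
move=> /cvgrPdist_lt ua fi; apply/cvgrPdist_lt => e e0.
have [K _ uK] := ua e e0; exists K => // k /= Kk.
exact/uK/(leq_trans Kk (incr_ge fi k)).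
Qed.

Lemma cvg_le_bound u a C : u @ \oo --> a -> (forall k, u k <= C) -> a <= C.
Proof.
move=> /cvgrPdist_lt ua uC; rewrite leNgt; apply/negP => Ca.
have [K _ uK] := ua (a - C) (ltac:(by rewrite subr_gt0)).
by have := uK K (leqnn K); have := uC K; rewrite ltr_distlC; lra.
Qed.

Lemma cvg_sum_ord p (u : 'I_p -> nat -> R) (a : 'I_p -> R) :
  (forall i, u i @ \oo --> a i) ->
  (fun k => \sum_i u i k) @ \oo --> \sum_i a i.
Proof.
elim: p u a => [|p ih] u a ua.
  by under eq_fun do rewrite big_ord0; rewrite big_ord0; exact: cvg_cst.
under eq_fun do rewrite big_ord_recr; rewrite big_ord_recr /=.
apply: cvgD; last exact: ua.
exact: (ih (fun i => u (widen_ord (leqnSn p) i)) (fun i => a (widen_ord (leqnSn p) i))).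
Qed.

Lemma nonincreasing_diff_cvg0 u : (forall k, u k.+1 <= u k) -> (forall k, 0 <= u k) ->
  (fun k => u k - u k.+1) @ \oo --> 0.
Proof.
move=> u_dec u_ge0.
have lb : has_lbound (range u) by exists 0 => _ [k _ <-].
have ucv := nonincreasing_cvgn ((nonincreasing_seqP u).1 u_dec) lb.
have ucvS : (fun k => u k.+1) @ \oo --> inf (range u) by rewrite cvg_shiftS.
by rewrite -(subrr (inf (range u))); exact: cvgB ucv ucvS.
Qed.

Lemma bw_family (I : finType) (u : I -> nat -> R) C : (forall i k, `|u i k| <= C) ->
  exists f, (forall k, f k < f k.+1)%N /\
    exists a : I -> R, forall i, (fun k => u i (f k)) @ \oo --> a i.
Proof.
move=> uC.
suff [f [fi fa]] : exists f, (forall k, f k < f k.+1)%N /\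
    forall i, exists a, (fun k => u i (f k)) @ \oo --> a.
  by exists f; split => //; exists (fun i => projT1 (cid (fa i))) => i; exact: projT2 (cid (fa i)).
suff /(_ (enum I)) [f [fi fl]] : forall l : seq I, exists f, (forall k, f k < f k.+1)%N /\
    forall i, i \in l -> exists a, (fun k => u i (f k)) @ \oo --> a.
  by exists f; split => // i; apply: fl; rewrite mem_enum.
elim => [|i l [f [fi fl]]]; first by exists id.
have ub : bounded_fun (fun k => u i (f k)).
  exists C; split; first exact: num_real.
  by move=> M CM k _ /=; apply: le_trans (uC i (f k)) _; exact: ltW.
have [g /increasing_seqP gi gcv] := bolzano_weierstrass ub.
exists (fun k => f (g k)); split; first exact: incr_comp.
move=> j; rewrite inE => /orP [/eqP -> | jl]; first by exists (lim ((fun k => u i (f k)) \o g @ \oo)).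
by have [a ja] := fl j jl; exists a; exact: cvg_subseq ja gi.
Qed.

End RealSequences.

Section MatrixSequences.
Variable R : realType.
Variables p q : nat.
Local Notation mxseq := (nat -> 'M[R]_(p, q)).

Definition mxcvg (A_ : mxseq) (A : 'M[R]_(p, q)) := forall i j, (fun k => A_ k i j) @ \oo --> A i j.

Lemma mxcvg_cst (A : 'M[R]_(p, q)) : mxcvg (fun=> A) A.
Proof. by move=> i j; exact: cvg_cst. Qed.

Lemma mxcvgD (A_ B_ : mxseq) A B : mxcvg A_ A -> mxcvg B_ B -> mxcvg (fun k => A_ k + B_ k) (A + B).
Proof. by move=> cA cB i j; rewrite mxE; under eq_fun do rewrite mxE; exact: cvgD. Qed.

Lemma mxcvgN (A_ : mxseq) A : mxcvg A_ A -> mxcvg (fun k => - A_ k) (- A).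
Proof. by move=> cA i j; rewrite mxE; under eq_fun do rewrite mxE; exact: cvgN. Qed.

Lemma mxcvgB (A_ B_ : mxseq) A B : mxcvg A_ A -> mxcvg B_ B -> mxcvg (fun k => A_ k - B_ k) (A - B).
Proof. by move=> cA cB; apply: mxcvgD cA (mxcvgN cB). Qed.

Lemma mxcvgZ (A_ : mxseq) A (x : R) : mxcvg A_ A -> mxcvg (fun k => x *: A_ k) (x *: A).
Proof. by move=> cA i j; rewrite mxE; under eq_fun do rewrite mxE; exact: cvgMr. Qed.

Lemma mxcvgZ0 (A_ : mxseq) (x : R) : mxcvg A_ 0 -> mxcvg (fun k => x *: A_ k) 0.
Proof. by move=> /(mxcvgZ (x := x)); rewrite scaler0. Qed.

Lemma mxcvg_unique (A_ : mxseq) A B : mxcvg A_ A -> mxcvg A_ B -> A = B.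
Proof. by move=> cA cB; apply/matrixP => i j; exact: cvg_unique (cA i j) (cB i j). Qed.

Lemma mxcvg_subseq (A_ : mxseq) A (f : nat -> nat) : mxcvg A_ A -> (forall k, f k < f k.+1)%N ->
  mxcvg (fun k => A_ (f k)) A.
Proof. by move=> cA fi i j; exact: cvg_subseq (cA i j) fi. Qed.

Lemma mxcvg_shiftS (A_ : mxseq) A : mxcvg (fun k => A_ k.+1) A -> mxcvg A_ A.
Proof. by move=> cA i j; rewrite -cvg_shiftS; exact: cA. Qed.

Lemma mxcvg_sub0 (A_ B_ : mxseq) A : mxcvg A_ A -> mxcvg (fun k => B_ k - A_ k) 0 -> mxcvg B_ A.
Proof.
move=> cA cBA; have := mxcvgD cBA cA; rewrite add0r.
by under eq_fun do rewrite subrK.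
Qed.

Lemma fnorm2_cvg (A_ : mxseq) A : mxcvg A_ A -> (fun k => fnorm2 (A_ k)) @ \oo --> fnorm2 A.
Proof.
move=> cA; under eq_fun do rewrite fnorm2E; rewrite fnorm2E.
by apply: cvg_sum_ord => i; apply: cvg_sum_ord => j; exact: cvgM.
Qed.

Lemma mxcvg_fnorm2_cvg0 (A_ : mxseq) : (fun k => fnorm2 (A_ k)) @ \oo --> 0 -> mxcvg A_ 0.
Proof.
move=> /cvgrPdist_lt cA i j; apply/cvgrPdist_lt => e e0.
have [K _ AK] := cA (e ^+ 2) (exprn_gt0 _ e0); exists K => // k /= Kk.
have := AK k Kk; rewrite !mxE !sub0r !normrN ger0_norm ?fnorm2_ge0 // => Ae.
rewrite -ltr_sqr ?nnegrE ?normr_ge0 ?(ltW e0) // real_normK ?num_real //.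
exact: le_lt_trans (sqr_entry_le_fnorm2 (A_ k) i j) Ae.
Qed.

Lemma mxcvg_fnormP (A_ : mxseq) A : mxcvg A_ A <->
  forall e, 0 < e -> exists K, forall k, (K <= k)%N -> fnorm (A_ k - A) < e.
Proof.
split => [cA e e0|cA i j].
  have := fnorm2_cvg (mxcvgB cA (mxcvg_cst (A := A))); rewrite subrr /fnorm2 mxinner0l.
  move=> /cvgrPdist_lt /(_ (e ^+ 2) (exprn_gt0 _ e0)) [K _ AK]; exists K => k Kk.
  have := AK k Kk; rewrite sub0r normrN ger0_norm ?fnorm2_ge0 // => Ae.
  by rewrite fnormE -(ger0_norm (ltW e0)) -sqrtr_sqr ltr_sqrt ?exprn_gt0 // normrX ger0_norm ?(ltW e0).
apply/cvgrPdist_lt => e e0; have [K AK] := cA e e0; exists K => // k /= Kk.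
rewrite distrC; apply: le_lt_trans (AK k Kk).
by have := entry_le_fnorm (A_ k - A) i j; rewrite !mxE.
Qed.

End MatrixSequences.

Lemma mxcvgM (R : realType) p q o (A_ : nat -> 'M[R]_(p, q)) (B_ : nat -> 'M[R]_(q, o)) A B :
  mxcvg A_ A -> mxcvg B_ B -> mxcvg (fun k => A_ k *m B_ k) (A *m B).
Proof.
move=> cA cB i j; rewrite mxE; under eq_fun do rewrite mxE.
by apply: cvg_sum_ord => l; exact: cvgM.
Qed.

Lemma mxcvgT (R : realType) p q (A_ : nat -> 'M[R]_(p, q)) A :
  mxcvg A_ A -> mxcvg (fun k => (A_ k)^T) A^T.
Proof. by move=> cA i j; rewrite mxE; under eq_fun do rewrite mxE; exact: cA. Qed.

Lemma le_max8 (R : realType) (a1 a2 a3 a4 a5 a6 a7 a8 : R)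
  (M := Num.max a1 (Num.max a2 (Num.max a3 (Num.max a4 (Num.max a5 (Num.max a6
          (Num.max a7 a8))))))) :
  [/\ a1 <= M, a2 <= M, a3 <= M, a4 <= M & [/\ a5 <= M, a6 <= M, a7 <= M & a8 <= M]].
Proof. by rewrite /M !le_max !lexx !orbT. Qed.

Lemma max8_lt (R : realType) (a1 a2 a3 a4 a5 a6 a7 a8 e : R) :
  a1 < e -> a2 < e -> a3 < e -> a4 < e -> a5 < e -> a6 < e -> a7 < e -> a8 < e ->
  Num.max a1 (Num.max a2 (Num.max a3 (Num.max a4 (Num.max a5 (Num.max a6
    (Num.max a7 a8)))))) < e.
Proof. by move=> *; rewrite !gt_max; apply/and5P; split => //; apply/and4P. Qed.

Section StateSequences.
Variable R : realType.
Variables m n r s c : nat.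
Local Notation st := (state R m n r s c).

Definition stcvg (T_ : nat -> st) (T : st) :=
  [/\ mxcvg (fun k => Om (T_ k)) (Om T), mxcvg (fun k => Uv (T_ k)) (Uv T),
      mxcvg (fun k => Qv (T_ k)) (Qv T), mxcvg (fun k => Wv (T_ k)) (Wv T) &
    [/\ mxcvg (fun k => E1 (T_ k)) (E1 T), mxcvg (fun k => E2 (T_ k)) (E2 T),
        mxcvg (fun k => Z1 (T_ k)) (Z1 T) & mxcvg (fun k => Z2 (T_ k)) (Z2 T)]].

Lemma stcvg_stdistP (T_ : nat -> st) T : stcvg T_ T <->
  forall e, 0 < e -> exists K, forall k, (K <= k)%N -> stdist (T_ k) T < e.
Proof.
split.
  case=> cO cU cQ cW [cE1 cE2 cZ1 cZ2] e e0.
  have [K1 h1] := (mxcvg_fnormP _ _).1 cO e e0; have [K2 h2] := (mxcvg_fnormP _ _).1 cU e e0.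
  have [K3 h3] := (mxcvg_fnormP _ _).1 cQ e e0; have [K4 h4] := (mxcvg_fnormP _ _).1 cW e e0.
  have [K5 h5] := (mxcvg_fnormP _ _).1 cE1 e e0; have [K6 h6] := (mxcvg_fnormP _ _).1 cE2 e e0.
  have [K7 h7] := (mxcvg_fnormP _ _).1 cZ1 e e0; have [K8 h8] := (mxcvg_fnormP _ _).1 cZ2 e e0.
  exists (K1 + K2 + K3 + K4 + K5 + K6 + K7 + K8)%N => k Kk.
  by apply: max8_lt; [apply: h1|apply: h2|apply: h3|apply: h4|apply: h5|apply: h6
    |apply: h7|apply: h8]; lia.
move=> cT.
have comp a b (F : st -> 'M[R]_(a, b)) :
    (forall T', fnorm (F T' - F T) <= stdist T' T) -> mxcvg (fun k => F (T_ k)) (F T).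
  move=> Fle; apply/mxcvg_fnormP => e e0; have [K TK] := cT e e0.
  by exists K => k Kk; exact: le_lt_trans (Fle _) (TK k Kk).
by split; [| | | | split]; apply: comp => T'; have [? ? ? ? [? ? ? ?]] := le_max8
  (fnorm (Om T' - Om T)) (fnorm (Uv T' - Uv T)) (fnorm (Qv T' - Qv T))
  (fnorm (Wv T' - Wv T)) (fnorm (E1 T' - E1 T)) (fnorm (E2 T' - E2 T))
  (fnorm (Z1 T' - Z1 T)) (fnorm (Z2 T' - Z2 T)).
Qed.

Local Notation coord_idx := (('I_r * 'I_m) + ('I_r * 'I_n) + ('I_s * 'I_r) + ('I_c * 'I_s)
  + ('I_s * 'I_n) + ('I_c * 'I_n) + ('I_s * 'I_n) + ('I_c * 'I_n))%type.

Definition state_coord (T : st) (x : coord_idx) : R :=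
  match x with
  | inl (inl (inl (inl (inl (inl (inl (i, j))))))) => Om T i j
  | inl (inl (inl (inl (inl (inl (inr (i, j))))))) => Uv T i j
  | inl (inl (inl (inl (inl (inr (i, j)))))) => Qv T i j
  | inl (inl (inl (inl (inr (i, j))))) => Wv T i j
  | inl (inl (inl (inr (i, j)))) => E1 T i j
  | inl (inl (inr (i, j))) => E2 T i j
  | inl (inr (i, j)) => Z1 T i j
  | inr (i, j) => Z2 T i j
  end.

Lemma state_bw (T_ : nat -> st) C : (forall k, stnorm (T_ k) <= C) ->
  exists f, (forall k, f k < f k.+1)%N /\ exists T, stcvg (fun k => T_ (f k)) T.
Proof.
move=> TC.
have coordC x k : `|state_coord (T_ k) x| <= C.
  have TCk := TC k; rewrite /stnorm in TCk.
  have [? ? ? ? [? ? ? ?]] := le_max8 (fnorm (Om (T_ k))) (fnorm (Uv (T_ k)))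
    (fnorm (Qv (T_ k))) (fnorm (Wv (T_ k))) (fnorm (E1 (T_ k))) (fnorm (E2 (T_ k)))
    (fnorm (Z1 (T_ k))) (fnorm (Z2 (T_ k))).
  by case: x => [[[[[[[[i j]|[i j]]|[i j]]|[i j]]|[i j]]|[i j]]|[i j]]|[i j]] /=;
    apply: le_trans (entry_le_fnorm _ i j) (le_trans _ TCk).
have [f [fi [a fa]]] := bw_family (u := fun x k => state_coord (T_ k) x) coordC.
exists f; split => //.
exists (State (\matrix_(i, j) a (inl (inl (inl (inl (inl (inl (inl (i, j)))))))))
  (\matrix_(i, j) a (inl (inl (inl (inl (inl (inl (inr (i, j)))))))))
  (\matrix_(i, j) a (inl (inl (inl (inl (inl (inr (i, j))))))))
  (\matrix_(i, j) a (inl (inl (inl (inl (inr (i, j)))))))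
  (\matrix_(i, j) a (inl (inl (inl (inr (i, j))))))
  (\matrix_(i, j) a (inl (inl (inr (i, j)))))
  (\matrix_(i, j) a (inl (inr (i, j))))
  (\matrix_(i, j) a (inr (i, j)))).
by split; [| | | |split] => i j /=; rewrite mxE; exact: fa.
Qed.

Lemma stdistC (T T' : st) : stdist T T' = stdist T' T.
Proof.
have e a b (A B : 'M[R]_(a, b)) : fnorm (A - B) = fnorm (B - A).
  by rewrite !fnormE fnorm2_subC.
by rewrite /stdist (e _ _ (Om T)) (e _ _ (Uv T)) (e _ _ (Qv T)) (e _ _ (Wv T))
  (e _ _ (E1 T)) (e _ _ (E2 T)) (e _ _ (Z1 T)) (e _ _ (Z2 T)).
Qed.

Lemma stnorm_le_of_stcvg (T_ : nat -> st) T C :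
  stcvg T_ T -> (forall k, stnorm (T_ k) <= C) -> stnorm T <= C.
Proof.
move=> [cOm cU cQ cW [cE1 cE2 cZ1 cZ2]] TC.
have comp a b (F : st -> 'M[R]_(a, b)) : mxcvg (fun k => F (T_ k)) (F T) ->
    (forall T', fnorm (F T') <= stnorm T') -> fnorm (F T) <= C.
  move=> cF Fle; have C0 : 0 <= C.
    by apply: le_trans (TC 0%N); apply: le_trans (Fle (T_ 0%N)); rewrite fnormE sqrtr_ge0.
  rewrite fnormE -(ger0_norm C0) -sqrtr_sqr ler_sqrt ?sqr_ge0 //.
  apply: cvg_le_bound (fnorm2_cvg cF) _ => k; rewrite -sqr_fnorm.
  by rewrite ler_pXn2r ?nnegrE ?fnormE ?sqrtr_ge0 // -fnormE (le_trans (Fle _) (TC k)).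
have comps (T' : st) := le_max8 (fnorm (Om T')) (fnorm (Uv T')) (fnorm (Qv T'))
  (fnorm (Wv T')) (fnorm (E1 T')) (fnorm (E2 T')) (fnorm (Z1 T')) (fnorm (Z2 T')).
rewrite /stnorm !ge_max; repeat (apply/andP; split).
all: by apply: comp => // T'; case: (comps T') => ? ? ? ? [].
Qed.

Lemma dist_cvg0_of_subseq_limits (T_ : nat -> st) C (S : st -> Prop) :
  (forall k, stnorm (T_ k) <= C) ->
  (forall phi T, (forall k, phi k < phi k.+1)%N -> stcvg (fun k => T_ (phi k)) T -> S T) ->
  forall e, 0 < e -> exists K, forall k, (K <= k)%N -> exists T', S T' /\ stdist T' (T_ k) < e.
Proof.
move=> TC limS e e0; apply: contrapT => far.
have bad K : exists k, (K <= k)%N /\ forall T', S T' -> ~ stdist T' (T_ k) < e.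
  apply: contrapT => nbad; apply: far; exists K => k Kk; apply: contrapT => nclose.
  by apply: nbad; exists k; split => // T' ST' close; apply: nclose; exists T'.
pose g K := projT1 (cid (bad K)); have gP K := projT2 (cid (bad K)).
pose phi := fix phi j := if j is j'.+1 then g (phi j').+1 else g 0%N.
have phi_incr k : (phi k < phi k.+1)%N by exact: (gP (phi k).+1).1.
have phi_far k T' : S T' -> ~ stdist T' (T_ (phi k)) < e.
  by case: k => [|k]; [exact: (gP 0%N).2 | exact: (gP (phi k).+1).2].
have [f [f_incr [T cT]]] := state_bw (fun k => TC (phi k)).
have [K TK] := (stcvg_stdistP _ _).1 cT e e0.
apply: (phi_far (f K) T (limS _ _ (incr_comp phi_incr f_incr) cT)).
by rewrite stdistC; exact: TK K (leqnn K).
Qed.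

End StateSequences.

Lemma l1sign_closed (R : realType) a b (U_ S_ : nat -> 'M[R]_(a, b)) U S :
  mxcvg U_ U -> mxcvg S_ S -> (forall k, l1sign (U_ k) (S_ k)) -> l1sign U S.
Proof.
move=> cU cS US i j; split.
  by apply: cvg_le_bound (cvg_norm (cS i j)) _ => k; case: (US k i j).
have SU : (fun k => S_ k i j * U_ k i j) = (fun k => `|U_ k i j|).
  by apply/funext => k; case: (US k i j).
have cSU : (fun k => S_ k i j * U_ k i j) @ \oo --> S i j * U i j.
  exact: cvgM (cS i j) (cU i j).
rewrite SU in cSU; exact: cvg_unique _ cSU (cvg_norm (cU i j)).
Qed.

Section Stationarity.
Variable R : realType.
Variables m n r s c : nat.
Variables (X : 'M[R]_(m, n)) (H : 'M[R]_(s, n)) (Y : 'M[R]_(c, n)) (P : adm_params R).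
Hypothesis Ppos : params_pos P.

Local Notation st := (state R m n r s c).

Definition stationary (T : st) :=
  [/\ gradOm X P T = 0, gradQ H Y P T = 0, gradW Y P T = 0,
      resid1 H T = 0 /\ resid2 Y T = 0 &
      [/\ Z1 T = rho1 P *: E1 T, Z2 T = rho2 P *: E2 T &
          l1sign (Uv T) (- (lam1 P)^-1 *: gradU X H Y P T)]].

Lemma stationary_in_S (T : st) Rad :
  stationary T -> stnorm T < Rad -> in_S X H Y P Rad T.
Proof.
move=> [gOm gQ gW [r1 r2] [ZE1 ZE2 Usign]] TR.
have gE1 : gradE1 H P T = 0 by rewrite /gradE1 r1 scaler0 add0r ZE1 subrr.
have gE2 : gradE2 Y P T = 0 by rewrite /gradE2 r2 scaler0 add0r ZE2 subrr.
have LsE a b (upd : 'M[R]_(a, b) -> st) V G q :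
    quad_exp (fun W => Lag X H Y P (upd W)) V G q -> (forall W, Uv (upd W) = Uv (upd V)) ->
    G = 0 -> is_grad (fun W => Ls X H Y P (upd W)) V 0.
  by move=> fq updU G0; rewrite -G0; exact/quad_exp_grad/(quad_exp_Ls_of_Lag updU fq).
split; first exact: TR.
split.
  exists (gradU X H Y P T), (- (lam1 P)^-1 *: gradU X H Y P T).
  split; first exact: quad_exp_grad (quad_exp_LsU X H Y P T).
  split; first exact: l1sign_subgrad Usign.
  by rewrite scalerA mulrN mulfV ?gt_eqF ?(lam1_gt0 Ppos) // scaleN1r.
split; first exact: LsE _ _ _ _ _ _ (quad_exp_LagOm X H Y P T) (fun=> erefl) gOm.
split; first exact: LsE _ _ _ _ _ _ (quad_exp_LagQ X H Y P T) (fun=> erefl) gQ.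
split; first exact: LsE _ _ _ _ _ _ (quad_exp_LagW X H Y P T) (fun=> erefl) gW.
split; first exact: LsE _ _ _ _ _ _ (quad_exp_LagE1 X H Y P T) (fun=> erefl) gE1.
split; first exact: LsE _ _ _ _ _ _ (quad_exp_LagE2 X H Y P T) (fun=> erefl) gE2.
split; first by rewrite -r1; exact: quad_exp_grad (quad_exp_LsZ1 X H Y P T).
split; first by rewrite -r2; exact: quad_exp_grad (quad_exp_LsZ2 X H Y P T).
split.
  by move/eqP: r1; rewrite /resid1 subr_eq0 => /eqP <-; rewrite addrC subrK.
by move/eqP: r2; rewrite /resid2 subr_eq0 => /eqP <-; rewrite addrC subrK.
Qed.

Ltac mxcvg_tac :=
  match goal with
  | |- mxcvg (fun k => @?a k + @?b k) _ => apply: (mxcvgD (A_ := a) (B_ := b)); mxcvg_tac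
  | |- mxcvg (fun k => - @?a k) _ => apply: (mxcvgN (A_ := a)); mxcvg_tac
  | |- mxcvg (fun k => ?x *: @?a k) _ => apply: (mxcvgZ (x := x) (A_ := a)); mxcvg_tac
  | |- mxcvg (fun k => @?a k *m @?b k) _ => apply: (mxcvgM (A_ := a) (B_ := b)); mxcvg_tac
  | |- mxcvg (fun k => (@?a k)^T) _ => apply: (mxcvgT (A_ := a)); mxcvg_tac
  | |- _ => first [assumption | exact: mxcvg_cst]
  end.

Section GradientContinuity.
Variables (T_ : nat -> st) (T : st).
Hypothesis TT : stcvg T_ T.

Lemma gradU_cvg : mxcvg (fun k => gradU X H Y P (T_ k)) (gradU X H Y P T).
Proof. by case: TT => ? ? ? ? [? ? ? ?]; rewrite /gradU /resid1 /resid2; mxcvg_tac. Qed.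
Lemma gradQ_cvg : mxcvg (fun k => gradQ H Y P (T_ k)) (gradQ H Y P T).
Proof. by case: TT => ? ? ? ? [? ? ? ?]; rewrite /gradQ /resid1 /resid2; mxcvg_tac. Qed.
Lemma gradW_cvg : mxcvg (fun k => gradW Y P (T_ k)) (gradW Y P T).
Proof. by case: TT => ? ? ? ? [? ? ? ?]; rewrite /gradW /resid2; mxcvg_tac. Qed.
Lemma gradOm_cvg : mxcvg (fun k => gradOm X P (T_ k)) (gradOm X P T).
Proof. by case: TT => ? ? ? ? [? ? ? ?]; rewrite /gradOm; mxcvg_tac. Qed.
Lemma resid1_cvg : mxcvg (fun k => resid1 H (T_ k)) (resid1 H T).
Proof. by case: TT => ? ? ? ? [? ? ? ?]; rewrite /resid1; mxcvg_tac. Qed.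
Lemma resid2_cvg : mxcvg (fun k => resid2 Y (T_ k)) (resid2 Y T).
Proof. by case: TT => ? ? ? ? [? ? ? ?]; rewrite /resid2; mxcvg_tac. Qed.

End GradientContinuity.

End Stationarity.

Section Iterates.
Variable R : realType.
Variables m n r s c : nat.
Variables (X : 'M[R]_(m, n)) (H : 'M[R]_(s, n)) (Y : 'M[R]_(c, n)) (P : adm_params R).
Hypothesis Ppos : params_pos P.
Hypothesis rho1_lt_mu : rho1 P < mu P.
Hypothesis rho2_lt_mu : rho2 P < mu P.

Local Notation st := (state R m n r s c).
Local Notation Lag := (Lag X H Y P).
Local Notation mu := (mu P).
Local Notation rho1 := (rho1 P).
Local Notation rho2 := (rho2 P).

Definition dual_const := 2 * mu * (rho1 / (mu - rho1) + rho2 / (mu - rho2)).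

Lemma mu_rho1_gt0 : 0 < mu - rho1. Proof. by rewrite subr_gt0. Qed.
Lemma mu_rho2_gt0 : 0 < mu - rho2. Proof. by rewrite subr_gt0. Qed.

Lemma dual_const_ge0 : 0 <= dual_const.
Proof.
have := mu_gt0 Ppos; have := rho1_gt0 Ppos; have := rho2_gt0 Ppos => r2 r1 mu0.
have := mu_rho1_gt0; have := mu_rho2_gt0 => d2 d1.
by apply: mulr_ge0; [lra | apply: addr_ge0; apply: divr_ge0; lra].
Qed.

(* With [Z = rho E], [primal_energy_le] leaves
   [rho (mu - rho) / (2 mu) * ||E||^2 <= Lag], and [mu > rho]. *)
Lemma dual_fnorm2_le_Lag (T : st) : Z1 T = rho1 *: E1 T -> Z2 T = rho2 *: E2 T ->
  [/\ 0 <= Lag T, fnorm2 (Z1 T) <= dual_const * Lag T & fnorm2 (Z2 T) <= dual_const * Lag T].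
Proof.
move=> ZE1 ZE2.
have mu0 := mu_gt0 Ppos; have r10 := rho1_gt0 Ppos; have r20 := rho2_gt0 Ppos.
have d1 := mu_rho1_gt0; have d2 := mu_rho2_gt0.
set a1 := rho1 * (mu - rho1) / (2 * mu); set a2 := rho2 * (mu - rho2) / (2 * mu).
have a1_gt0 : 0 < a1 by rewrite /a1 !divr_gt0 ?mulr_gt0.
have a2_gt0 : 0 < a2 by rewrite /a2 !divr_gt0 ?mulr_gt0.
have LagE : a1 * fnorm2 (E1 T) + a2 * fnorm2 (E2 T) <= Lag T.
  have := primal_energy_le X H Y Ppos T; rewrite /Lag_shift ZE1 ZE2 !fnorm2Z.
  have -> : (rho1 ^+ 2 * fnorm2 (E1 T) + rho2 ^+ 2 * fnorm2 (E2 T)) / (2 * mu) =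
      rho1 / 2 * fnorm2 (E1 T) + rho2 / 2 * fnorm2 (E2 T)
      - (a1 * fnorm2 (E1 T) + a2 * fnorm2 (E2 T)).
    by rewrite /a1 /a2; field; rewrite gt_eqF.
  have w a b k (A : 'M[R]_(a, b)) : 0 < k -> 0 <= k / 2 * fnorm2 A.
    by move=> k0; rewrite mulr_ge0 ?divr_ge0 ?fnorm2_ge0 // ltW.
  have := w _ _ _ (Uv T - Om T *m X) ltr01; have := w _ _ _ (Om T) (lam2_gt0 Ppos).
  have := w _ _ _ (Qv T) (del1_gt0 Ppos); have := w _ _ _ (Wv T) (del2_gt0 Ppos).
  rewrite div1r; lra.
have t1 : 0 <= a1 * fnorm2 (E1 T) by rewrite mulr_ge0 ?fnorm2_ge0 ?ltW.
have t2 : 0 <= a2 * fnorm2 (E2 T) by rewrite mulr_ge0 ?fnorm2_ge0 ?ltW.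
have Lag0 : 0 <= Lag T by lra.
have Z1E : fnorm2 (Z1 T) = 2 * mu * (rho1 / (mu - rho1)) * (a1 * fnorm2 (E1 T)).
  by rewrite ZE1 fnorm2Z /a1; field; rewrite !gt_eqF.
have Z2E : fnorm2 (Z2 T) = 2 * mu * (rho2 / (mu - rho2)) * (a2 * fnorm2 (E2 T)).
  by rewrite ZE2 fnorm2Z /a2; field; rewrite !gt_eqF.
have k1 : 0 <= 2 * mu * (rho1 / (mu - rho1)).
  by apply: mulr_ge0; [lra | apply: divr_ge0; lra].
have k2 : 0 <= 2 * mu * (rho2 / (mu - rho2)).
  by apply: mulr_ge0; [lra | apply: divr_ge0; lra].
have c_split : dual_const =
    2 * mu * (rho1 / (mu - rho1)) + 2 * mu * (rho2 / (mu - rho2)) by rewrite /dual_const; ring.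
split => //; rewrite ?Z1E ?Z2E c_split.
- apply: le_trans (_ : _ <= 2 * mu * (rho1 / (mu - rho1)) * Lag T) _.
    by apply: ler_wpM2l => //; lra.
  by have := mulr_ge0 k2 Lag0; lra.
- apply: le_trans (_ : _ <= 2 * mu * (rho2 / (mu - rho2)) * Lag T) _.
    by apply: ler_wpM2l => //; lra.
  by have := mulr_ge0 k1 Lag0; lra.
Qed.

Definition Z_energy (T : st) := fnorm2 (Z1 T) + fnorm2 (Z2 T).

Definition state_energy (T : st) := fnorm2 (Om T) + fnorm2 (Uv T) + fnorm2 (Qv T)
  + fnorm2 (Wv T) + fnorm2 (E1 T) + fnorm2 (E2 T) + Z_energy T.

(* An upper bound for [Lag] along the iterates from the first one on. *)
Definition Lag_bound (T0 : st) := `|Lag T0| +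
  (2 * (rho1 ^+ 2 + rho2 ^+ 2) * `|block_bound X P (Lag T0) (Z_energy T0)|
   + 2 * Z_energy T0) / mu.

Definition iter_block_bound (T0 : st) :=
  Num.max (block_bound X P (Lag T0) (Z_energy T0))
          (block_bound X P (Lag_bound T0) (dual_const * Lag_bound T0)).

Definition iter_fnorm2_bound (T0 : st) :=
  state_energy T0 + iter_block_bound T0 + dual_const * Lag_bound T0.

Lemma Z_energy_ge0 (T : st) : 0 <= Z_energy T.
Proof. by rewrite addr_ge0 ?fnorm2_ge0. Qed.

Lemma Lag_bound_ge0 (T0 : st) : 0 <= Lag_bound T0.
Proof.
have mu0 := mu_gt0 Ppos; have := Z_energy_ge0 T0.
have := normr_ge0 (block_bound X P (Lag T0) (Z_energy T0)) => b0 z0.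
rewrite /Lag_bound; apply: addr_ge0 => //; apply: divr_ge0; last exact: ltW.
apply: addr_ge0; last by rewrite mulr_ge0.
by apply: mulr_ge0 => //; rewrite mulr_ge0 // addr_ge0 // sqr_ge0.
Qed.

Lemma iter_block_bound_ge0 (T0 : st) : 0 <= iter_block_bound T0.
Proof.
rewrite /iter_block_bound le_max; apply/orP; right.
apply: mulr_ge0; first exact: coerc_const_ge0.
apply: addr_ge0; first exact: Lag_bound_ge0.
apply: divr_ge0; last exact: ltW (mu_gt0 Ppos).
exact: mulr_ge0 dual_const_ge0 (Lag_bound_ge0 _).
Qed.

Lemma iter_block_bound_ge (T0 : st) :
  block_bound X P (Lag T0) (Z_energy T0) <= iter_block_bound T0 /\
  block_bound X P (Lag_bound T0) (dual_const * Lag_bound T0) <= iter_block_bound T0.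
Proof. by rewrite /iter_block_bound !le_max !lexx orbT. Qed.

Definition kappa1 := (rho1 + mu) / 2 - rho1 ^+ 2 / mu.
Definition kappa2 := (rho2 + mu) / 2 - rho2 ^+ 2 / mu.

Lemma kappa_gt0 : 0 < kappa1 /\ 0 < kappa2.
Proof.
have mu0 := mu_gt0 Ppos; have r10 := rho1_gt0 Ppos; have r20 := rho2_gt0 Ppos.
have d1 := mu_rho1_gt0; have d2 := mu_rho2_gt0.
have -> : kappa1 = (mu - rho1) * (mu + 2 * rho1) / (2 * mu).
  by rewrite /kappa1; field; rewrite gt_eqF.
have -> : kappa2 = (mu - rho2) * (mu + 2 * rho2) / (2 * mu).
  by rewrite /kappa2; field; rewrite gt_eqF.
by split; apply: divr_gt0; rewrite ?mulr_gt0 //; lra.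
Qed.

(* The decrease left once the dual ascent [||Z' - Z||^2 / mu] is paid for
   by the E-steps. *)
Definition net_decrease (T T' : st) :=
  fnorm2 (Uv T' - Uv T) + fnorm2 (Qv T' - Qv T) + fnorm2 (Wv T' - Wv T)
  + lam2 P / 2 * fnorm2 (Om T' - Om T)
  + kappa1 * fnorm2 (E1 T' - E1 T) + kappa2 * fnorm2 (E2 T' - E2 T).

Lemma net_decrease_ge_parts (T T' : st) (N := net_decrease T T') :
  [/\ 1 * fnorm2 (Uv T' - Uv T) <= N, 1 * fnorm2 (Qv T' - Qv T) <= N,
      1 * fnorm2 (Wv T' - Wv T) <= N, lam2 P / 2 * fnorm2 (Om T' - Om T) <= N &
      kappa1 * fnorm2 (E1 T' - E1 T) <= N /\ kappa2 * fnorm2 (E2 T' - E2 T) <= N].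
Proof.
have [k1 k2] := kappa_gt0; have l2 := lam2_gt0 Ppos.
have w a b k (A : 'M[R]_(a, b)) : 0 <= k -> 0 <= k * fnorm2 A.
  by move=> k0; rewrite mulr_ge0 ?fnorm2_ge0.
have := w _ _ _ (Om T' - Om T) (divr_ge0 (ltW l2) (ler0n _ 2)).
have := w _ _ _ (E1 T' - E1 T) (ltW k1); have := w _ _ _ (E2 T' - E2 T) (ltW k2).
have := fnorm2_ge0 (Uv T' - Uv T); have := fnorm2_ge0 (Qv T' - Qv T).
have := fnorm2_ge0 (Wv T' - Wv T); rewrite /N /net_decrease => *.
by rewrite !mul1r; repeat split; lra.
Qed.

Lemma net_decrease_ge0 (T T' : st) : 0 <= net_decrease T T'.
Proof.
have [+ _ _ _ _] := net_decrease_ge_parts T T'.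
by apply: le_trans; rewrite mul1r fnorm2_ge0.
Qed.

Section Run.
Variable Th : nat -> st.
Variables etaU etaQ etaW : R.
Hypothesis steps : forall k, adm_step X H Y P etaU etaQ etaW (Th k) (Th k.+1).
Local Notation Bm := (iter_block_bound (Th 0)).
Hypothesis etaU_large : lip_const P Bm + 1 <= mu * etaU.
Hypothesis etaQ_large : lip_const P Bm + 1 <= mu * etaQ.
Hypothesis etaW_large : lip_const P Bm + 1 <= mu * etaW.

Lemma step_sizes_gt0 : [/\ 0 < etaU, 0 < etaQ & 0 < etaW].
Proof.
have := lip_const_ge1 Ppos (iter_block_bound_ge0 (Th 0)); have mu0 := mu_gt0 Ppos.
move=> L1; have := etaU_large; have := etaQ_large; have := etaW_large.
by split; rewrite -(pmulr_rgt0 _ mu0); lra.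
Qed.

Let step_optimality k :=
  let: And3 eU eQ eW := step_sizes_gt0 in adm_step_optimality Ppos eU eQ eW (steps k).

Lemma Z_eq_rhoE k : Z1 (Th k.+1) = rho1 *: E1 (Th k.+1) /\ Z2 (Th k.+1) = rho2 *: E2 (Th k.+1).
Proof. by case: (step_optimality k). Qed.

Lemma iterate_Z_le k : Lag (Th k.+1) <= Lag_bound (Th 0) ->
  fnorm2 (Z1 (Th k.+1)) <= dual_const * Lag_bound (Th 0) /\
  fnorm2 (Z2 (Th k.+1)) <= dual_const * Lag_bound (Th 0).
Proof.
move=> LB; have [ZE1 ZE2] := Z_eq_rhoE k; have [_ z1 z2] := dual_fnorm2_le_Lag ZE1 ZE2.
have LBc := ler_wpM2l dual_const_ge0 LB.
by split; [exact: le_trans z1 LBc | exact: le_trans z2 LBc].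
Qed.

Lemma Lag_first_step_le : Lag (Th 1) <= Lag_bound (Th 0).
Proof.
have mu0 := mu_gt0 Ppos; set b0 := block_bound X P (Lag (Th 0)) (Z_energy (Th 0)).
have z1 : fnorm2 (Z1 (Th 0)) <= Z_energy (Th 0) by rewrite /Z_energy lerDl fnorm2_ge0.
have z2 : fnorm2 (Z2 (Th 0)) <= Z_energy (Th 0) by rewrite /Z_energy lerDr fnorm2_ge0.
have [dec bE1 bE2] := adm_step_descent Ppos (steps 0) (lexx _) z1 z2
  (iter_block_bound_ge (Th 0)).1 etaU_large etaQ_large etaW_large.
have [Z1E Z2E] := Z_eq_rhoE 0.
have Z1le : fnorm2 (Z1 (Th 1)) <= rho1 ^+ 2 * `|b0|.
  by rewrite Z1E fnorm2Z ler_wpM2l ?sqr_ge0 // (le_trans bE1 (ler_norm _)).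
have Z2le : fnorm2 (Z2 (Th 1)) <= rho2 ^+ 2 * `|b0|.
  by rewrite Z2E fnorm2Z ler_wpM2l ?sqr_ge0 // (le_trans bE2 (ler_norm _)).
have := fnorm2B_le (Z1 (Th 1)) (Z1 (Th 0)); have := fnorm2B_le (Z2 (Th 1)) (Z2 (Th 0)).
move=> dZ2 dZ1.
have dZ : (fnorm2 (Z1 (Th 1) - Z1 (Th 0)) + fnorm2 (Z2 (Th 1) - Z2 (Th 0))) / mu <=
    (2 * (rho1 ^+ 2 + rho2 ^+ 2) * `|b0| + 2 * Z_energy (Th 0)) / mu.
  by rewrite ler_pM2r ?invr_gt0 // /Z_energy; lra.
have := step_decrease_ge0 Ppos (Th 0) (Th 1); have := ler_norm (Lag (Th 0)).
by rewrite /Lag_bound -/b0; lra.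
Qed.

Lemma Lag_decrease_of k : Lag (Th k.+1) <= Lag_bound (Th 0) ->
  Lag (Th k.+2) + net_decrease (Th k.+1) (Th k.+2) <= Lag (Th k.+1).
Proof.
move=> LB; have mu0 := mu_gt0 Ppos; have [z1 z2] := iterate_Z_le LB.
have [dec _ _] := adm_step_descent Ppos (steps k.+1) LB z1 z2
  (iter_block_bound_ge (Th 0)).2 etaU_large etaQ_large etaW_large.
have [Z1E Z2E] := Z_eq_rhoE k; have [Z1E' Z2E'] := Z_eq_rhoE k.+1.
rewrite Z1E Z2E Z1E' Z2E' -!scalerBr !fnorm2Z in dec.
move: dec; rewrite /net_decrease /step_decrease /kappa1 /kappa2.
set a1 := fnorm2 (E1 _ - _); set a2 := fnorm2 (E2 _ - _).
have -> : (rho1 ^+ 2 * a1 + rho2 ^+ 2 * a2) / mu = rho1 ^+ 2 / mu * a1 + rho2 ^+ 2 / mu * a2.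
  by field; rewrite gt_eqF.
lra.
Qed.

Lemma Lag_le_bound k : Lag (Th k.+1) <= Lag_bound (Th 0).
Proof.
elim: k => [|k IHk]; first exact: Lag_first_step_le.
by have := Lag_decrease_of IHk; have := net_decrease_ge0 (Th k.+1) (Th k.+2); lra.
Qed.

Lemma Lag_decrease k : Lag (Th k.+2) + net_decrease (Th k.+1) (Th k.+2) <= Lag (Th k.+1).
Proof. exact: Lag_decrease_of (Lag_le_bound k). Qed.

Lemma iterate_stnorm_le k : stnorm (Th k) <= Num.sqrt (iter_fnorm2_bound (Th 0)).
Proof.
have fle a b (A : 'M[R]_(a, b)) :
    fnorm2 A <= iter_fnorm2_bound (Th 0) -> fnorm A <= Num.sqrt (iter_fnorm2_bound (Th 0)).
  by move=> AB; rewrite fnormE ler_wsqrtr.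
have Bm0 := iter_block_bound_ge0 (Th 0).
have D0 : 0 <= dual_const * Lag_bound (Th 0).
  by rewrite mulr_ge0 ?dual_const_ge0 ?Lag_bound_ge0.
have := fnorm2_ge0 (Om (Th 0)); have := fnorm2_ge0 (Uv (Th 0)).
have := fnorm2_ge0 (Qv (Th 0)); have := fnorm2_ge0 (Wv (Th 0)).
have := fnorm2_ge0 (E1 (Th 0)); have := fnorm2_ge0 (E2 (Th 0)).
have := fnorm2_ge0 (Z1 (Th 0)); have := fnorm2_ge0 (Z2 (Th 0)) => *.
case: k => [|k].
  by rewrite /stnorm !ge_max !fle //; rewrite /iter_fnorm2_bound /state_energy /Z_energy; lra.
have LB := Lag_le_bound k; have [z1 z2] := iterate_Z_le LB.
have [_ b1Bm] := iter_block_bound_ge (Th 0).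
have [bOm [bU [bQ [bW [bE1 bE2]]]]] := fnorm2_blocks_le Ppos LB z1 z2.
by rewrite /stnorm !ge_max !fle //; rewrite /iter_fnorm2_bound /state_energy /Z_energy; lra.
Qed.

Lemma net_decrease_cvg0 : (fun k => net_decrease (Th k.+1) (Th k.+2)) @ \oo --> 0.
Proof.
set u := fun k => Lag (Th k.+1).
have u_dec k : u k.+1 <= u k.
  by have := Lag_decrease k; have := net_decrease_ge0 (Th k.+1) (Th k.+2); rewrite /u; lra.
have u_ge0 k : 0 <= u k.
  by have [Z1E Z2E] := Z_eq_rhoE k; have [] := dual_fnorm2_le_Lag Z1E Z2E.
apply: (squeeze_cvgr _ (cvg_cst 0) (nonincreasing_diff_cvg0 u_dec u_ge0)).
by apply: nearW => k; rewrite net_decrease_ge0 /=; have := Lag_decrease k; rewrite /u; lra.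
Qed.

Lemma diff_mxcvg0 a b (F : st -> 'M[R]_(a, b)) w : 0 < w ->
  (forall T T', w * fnorm2 (F T' - F T) <= net_decrease T T') ->
  mxcvg (fun k => F (Th k.+1) - F (Th k)) 0.
Proof.
move=> w0 Fw; apply: mxcvg_shiftS; apply: mxcvg_fnorm2_cvg0.
have cvg_w : (fun k => w^-1 * net_decrease (Th k.+1) (Th k.+2)) @ \oo --> 0.
  by rewrite -(mulr0 w^-1); apply: cvgM; [exact: cvg_cst | exact: net_decrease_cvg0].
apply: (squeeze_cvgr _ (cvg_cst 0) cvg_w); apply: nearW => k /=.
by rewrite fnorm2_ge0 /= -(ler_pM2l w0) mulrA mulfV ?gt_eqF // mul1r.
Qed.

Lemma iterate_diffs_cvg0 :
  [/\ mxcvg (fun k => Om (Th k.+1) - Om (Th k)) 0, mxcvg (fun k => Uv (Th k.+1) - Uv (Th k)) 0,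
      mxcvg (fun k => Qv (Th k.+1) - Qv (Th k)) 0, mxcvg (fun k => Wv (Th k.+1) - Wv (Th k)) 0 &
      mxcvg (fun k => E1 (Th k.+1) - E1 (Th k)) 0 /\ mxcvg (fun k => E2 (Th k.+1) - E2 (Th k)) 0].
Proof.
have [k1 k2] := kappa_gt0; have l2 : 0 < lam2 P / 2 by rewrite divr_gt0 ?lam2_gt0.
have parts T T' := net_decrease_ge_parts T T'.
split; last split.
- exact: @diff_mxcvg0 _ _ (@Om _ _ _ _ _ _) _ l2
    (fun T T' => let: And5 _ _ _ h _ := parts T T' in h).
- exact: @diff_mxcvg0 _ _ (@Uv _ _ _ _ _ _) _ ltr01
    (fun T T' => let: And5 h _ _ _ _ := parts T T' in h).
- exact: @diff_mxcvg0 _ _ (@Qv _ _ _ _ _ _) _ ltr01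
    (fun T T' => let: And5 _ h _ _ _ := parts T T' in h).
- exact: @diff_mxcvg0 _ _ (@Wv _ _ _ _ _ _) _ ltr01
    (fun T T' => let: And5 _ _ h _ _ := parts T T' in h).
- exact: @diff_mxcvg0 _ _ (@E1 _ _ _ _ _ _) _ k1
    (fun T T' => let: And5 _ _ _ _ (conj h _) := parts T T' in h).
- exact: @diff_mxcvg0 _ _ (@E2 _ _ _ _ _ _) _ k2
    (fun T T' => let: And5 _ _ _ _ (conj _ h) := parts T T' in h).
Qed.

Lemma Z_diff_cvg0 :
  mxcvg (fun k => Z1 (Th k.+1) - Z1 (Th k)) 0 /\ mxcvg (fun k => Z2 (Th k.+1) - Z2 (Th k)) 0.
Proof.
have [_ _ _ _ [dE1 dE2]] := iterate_diffs_cvg0.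
split; apply: mxcvg_shiftS.
  have -> : (fun k => Z1 (Th k.+2) - Z1 (Th k.+1)) =
      (fun k => rho1 *: (E1 (Th k.+2) - E1 (Th k.+1))).
    by apply/funext => k; rewrite (Z_eq_rhoE k.+1).1 (Z_eq_rhoE k).1 scalerBr.
  by apply: mxcvgZ0; exact: mxcvg_subseq dE1 (fun k => ltnSn k.+1).
have -> : (fun k => Z2 (Th k.+2) - Z2 (Th k.+1)) =
    (fun k => rho2 *: (E2 (Th k.+2) - E2 (Th k.+1))).
  by apply/funext => k; rewrite (Z_eq_rhoE k.+1).2 (Z_eq_rhoE k).2 scalerBr.
by apply: mxcvgZ0; exact: mxcvg_subseq dE2 (fun k => ltnSn k.+1).
Qed.

Lemma subseq_succ_stcvg (phi : nat -> nat) Ts : (forall k, phi k < phi k.+1)%N ->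
  stcvg (fun k => Th (phi k)) Ts -> stcvg (fun k => Th (phi k).+1) Ts.
Proof.
move=> phi_incr [cOm cU cQ cW [cE1 cE2 cZ1 cZ2]].
have sh a b (F : st -> 'M[R]_(a, b)) :
    mxcvg (fun k => F (Th k.+1) - F (Th k)) 0 ->
    mxcvg (fun k => F (Th (phi k))) (F Ts) -> mxcvg (fun k => F (Th (phi k).+1)) (F Ts).
  by move=> dF cF; exact: mxcvg_sub0 cF (mxcvg_subseq dF phi_incr).
have [dOm dU dQ dW [dE1 dE2]] := iterate_diffs_cvg0.
have [dZ1 dZ2] := Z_diff_cvg0.
by split; [exact: sh dOm cOm | exact: sh dU cU | exact: sh dQ cQ | exact: sh dW cW
  | split; [exact: sh dE1 cE1 | exact: sh dE2 cE2 | exact: sh dZ1 cZ1 | exact: sh dZ2 cZ2]].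
Qed.

Section SubsequenceLimit.
Variables (phi : nat -> nat) (Ts : st).
Hypothesis phi_incr : forall k, (phi k < phi k.+1)%N.
Hypothesis cT : stcvg (fun k => Th (phi k)) Ts.

Let cT' := subseq_succ_stcvg phi_incr cT.

Let sub a b (F : nat -> 'M[R]_(a, b)) (cF : mxcvg F 0) : mxcvg (fun k => F (phi k)) 0 :=
  mxcvg_subseq cF phi_incr.

Lemma limit_grads0 : [/\ gradOm X P Ts = 0, gradQ H Y P Ts = 0 & gradW Y P Ts = 0].
Proof.
have [_ _ dQ dW _] := iterate_diffs_cvg0.
have cT1 : stcvg (fun k => with_U (Th (phi k)) (Uv (Th (phi k).+1))) Ts.
  by case: cT => ? ? ? ? [? ? ? ?]; case: cT' => ? ? ? ? _; split.
have cT2 : stcvg (fun k => with_Q (with_U (Th (phi k)) (Uv (Th (phi k).+1)))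
    (Qv (Th (phi k).+1))) Ts.
  by case: cT => ? ? ? ? [? ? ? ?]; case: cT' => ? ? ? ? _; split.
split.
- apply: (mxcvg_unique (gradOm_cvg cT')).
  have -> : (fun k => gradOm X P (Th (phi k).+1)) = fun=> 0.
    by apply/funext => k; case: (step_optimality (phi k)).
  exact: mxcvg_cst.
- apply: (mxcvg_unique (gradQ_cvg cT1)).
  have -> : (fun k => gradQ H Y P (with_U (Th (phi k)) (Uv (Th (phi k).+1)))) =
      fun k => - ((mu * etaQ) *: (Qv (Th (phi k).+1) - Qv (Th (phi k)))).
    by apply/funext => k; case: (step_optimality (phi k)) => _ _ _ [].
  by rewrite -oppr0; apply/mxcvgN/mxcvgZ0; exact: sub dQ.
- apply: (mxcvg_unique (gradW_cvg cT2)).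
  have -> : (fun k => gradW Y P (with_Q (with_U (Th (phi k)) (Uv (Th (phi k).+1)))
      (Qv (Th (phi k).+1)))) =
      fun k => - ((mu * etaW) *: (Wv (Th (phi k).+1) - Wv (Th (phi k)))).
    by apply/funext => k; case: (step_optimality (phi k)) => _ _ _ [].
  by rewrite -oppr0; apply/mxcvgN/mxcvgZ0; exact: sub dW.
Qed.

Lemma limit_resids0 : resid1 H Ts = 0 /\ resid2 Y Ts = 0.
Proof.
have mu0 := mu_gt0 Ppos; have [dZ1 dZ2] := Z_diff_cvg0.
split.
  apply: (mxcvg_unique (resid1_cvg cT')).
  have -> : (fun k => resid1 H (Th (phi k).+1)) =
      fun k => mu^-1 *: (Z1 (Th (phi k).+1) - Z1 (Th (phi k))).
    apply/funext => k; case: (step_optimality (phi k)) => _ [-> _] _ _ _.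
    by rewrite scalerA mulVf ?gt_eqF // scale1r.
  by apply: mxcvgZ0; exact: sub dZ1.
apply: (mxcvg_unique (resid2_cvg cT')).
have -> : (fun k => resid2 Y (Th (phi k).+1)) =
    fun k => mu^-1 *: (Z2 (Th (phi k).+1) - Z2 (Th (phi k))).
  apply/funext => k; case: (step_optimality (phi k)) => _ [_ ->] _ _ _.
  by rewrite scalerA mulVf ?gt_eqF // scale1r.
by apply: mxcvgZ0; exact: sub dZ2.
Qed.

Lemma limit_Z_eq_rhoE : Z1 Ts = rho1 *: E1 Ts /\ Z2 Ts = rho2 *: E2 Ts.
Proof.
have [_ _ _ _ [cE1' cE2' cZ1' cZ2']] := cT'.
split.
  apply: (mxcvg_unique cZ1').
  have -> : (fun k => Z1 (Th (phi k).+1)) = fun k => rho1 *: E1 (Th (phi k).+1).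
    by apply/funext => k; exact: (Z_eq_rhoE _).1.
  exact: mxcvgZ.
apply: (mxcvg_unique cZ2').
have -> : (fun k => Z2 (Th (phi k).+1)) = fun k => rho2 *: E2 (Th (phi k).+1).
  by apply/funext => k; exact: (Z_eq_rhoE _).2.
exact: mxcvgZ.
Qed.

Lemma limit_l1sign : l1sign (Uv Ts) (- (lam1 P)^-1 *: gradU X H Y P Ts).
Proof.
(* the sign patterns produced by the soft-thresholding steps converge *)
have [_ dU _ _ _] := iterate_diffs_cvg0; have [_ cU' _ _ _] := cT'.
apply: (l1sign_closed cU' (S_ := fun k => - (lam1 P)^-1 *: (gradU X H Y P (Th (phi k))
  + (mu * etaU) *: (Uv (Th (phi k).+1) - Uv (Th (phi k)))))).
  apply: mxcvgZ; rewrite -[gradU X H Y P Ts]addr0.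
  by apply: mxcvgD (gradU_cvg cT) (mxcvgZ0 _ (sub dU)).
move=> k; case: (step_optimality (phi k)) => _ _ _ _ [S [US ->]].
by rewrite scalerN scaleNr opprK scalerA mulVf ?gt_eqF ?lam1_gt0 // scale1r.
Qed.

End SubsequenceLimit.

Lemma subseq_limit_stationary (phi : nat -> nat) Ts : (forall k, phi k < phi k.+1)%N ->
  stcvg (fun k => Th (phi k)) Ts -> stationary X H Y P Ts.
Proof.
move=> phi_incr cT; have [gOm gQ gW] := limit_grads0 phi_incr cT.
have [ZE1 ZE2] := limit_Z_eq_rhoE phi_incr cT.
by split => //; [exact: limit_resids0 phi_incr cT | split => //; exact: limit_l1sign].
Qed.

End Run.

End Iterates.

Lemma rho_lt_mu (R : realType) (P : adm_params R) : params_pos P ->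
  Num.sqrt 2 * Num.max (rho1 P) (rho2 P) <= mu P -> rho1 P < mu P /\ rho2 P < mu P.
Proof.
move=> Ppos le_mu; have s2 : 1 < Num.sqrt (2 : R) by rewrite -{1}sqrtr1 ltr_sqrt // ltr1n.
have lt_rho k : 0 < k -> k <= Num.max (rho1 P) (rho2 P) -> k < mu P.
  move=> k0 kM; have k_lt : k < Num.sqrt 2 * k by rewrite ltr_pMl.
  have : Num.sqrt 2 * k <= Num.sqrt 2 * Num.max (rho1 P) (rho2 P).
    by rewrite ler_wpM2l ?sqrtr_ge0.
  lra.
by split; apply: lt_rho; rewrite ?rho1_gt0 ?rho2_gt0 // le_max lexx ?orbT.
Qed.

Unset Implicit Arguments.

Theorem corollary1 (R : realType) (m n r s c : nat)
  (X : 'M[R]_(m, n)) (H : 'M[R]_(s, n)) (Y : 'M[R]_(c, n)) (P : adm_params R) :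
  params_pos P ->
  Num.sqrt 2 * Num.max (rho1 P) (rho2 P) <= mu P ->
  forall Theta0 : state R m n r s c,
  exists etaU0 etaQ0 etaW0 Rad : R,
    [/\ 0 < etaU0, 0 < etaQ0, 0 < etaW0, 0 < Rad &
    forall etaU etaQ etaW : R,
      etaU0 < etaU -> etaQ0 < etaQ -> etaW0 < etaW ->
      forall Theta : nat -> state R m n r s c,
        Theta 0%N = Theta0 ->
        (forall k : nat, adm_step X H Y P etaU etaQ etaW (Theta k) (Theta k.+1)) ->
        [/\ (* (1) bounded iterates *)
            (forall k : nat, stnorm (Theta k) < Rad),
            (* (2) limits of convergent subsequences lie in S *)
            (forall (phi : nat -> nat) (Thstar : state R m n r s c),
               (forall k : nat, (phi k < phi k.+1)%N) ->
               (forall eps : R, 0 < eps -> exists K : nat, forall k : nat,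
                  (K <= k)%N -> stdist (Theta (phi k)) Thstar < eps) ->
               in_S X H Y P Rad Thstar) &
            (* (3) dist(Theta_k, S) -> 0 *)
            (forall eps : R, 0 < eps -> exists K : nat, forall k : nat,
               (K <= k)%N -> exists T' : state R m n r s c,
                 in_S X H Y P Rad T' /\ stdist T' (Theta k) < eps)]].
Proof.
move=> Ppos le_mu Theta0; have [r1 r2] := rho_lt_mu Ppos le_mu; have mu0 := mu_gt0 Ppos.
pose Lip := lip_const P (iter_block_bound X H Y P Theta0) + 1.
pose Rad := Num.sqrt (iter_fnorm2_bound X H Y P Theta0) + 1.
have eta0_gt0 : 0 < Lip / mu P.
  have := lip_const_ge1 Ppos (iter_block_bound_ge0 X H Y Ppos r1 r2 Theta0).
  by move=> L1; apply: divr_gt0 => //; rewrite /Lip; lra.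
have Rad_gt0 : 0 < Rad by rewrite ltr_pwDr ?sqrtr_ge0.
exists (Lip / mu P), (Lip / mu P), (Lip / mu P), Rad.
split; [exact: eta0_gt0 | exact: eta0_gt0 | exact: eta0_gt0 | exact: Rad_gt0 |].
move=> etaU etaQ etaW etaU_gt etaQ_gt etaW_gt Theta Theta_0 steps; subst Theta0.
have large eta : Lip / mu P < eta -> Lip <= mu P * eta.
  by move/ltW; rewrite ler_pdivrMr // mulrC.
have [LU LQ LW] : [/\ Lip <= mu P * etaU, Lip <= mu P * etaQ & Lip <= mu P * etaW].
  by split; apply: large.
have iter_le := iterate_stnorm_le Ppos r1 r2 steps LU LQ LW.
have bound k : stnorm (Theta k) < Rad by apply: le_lt_trans (iter_le k) _; rewrite ltrDl.
have limS phi T : (forall k, phi k < phi k.+1)%N -> stcvg (fun k => Theta (phi k)) T ->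
    in_S X H Y P Rad T.
  move=> phi_incr cT; apply: (stationary_in_S Ppos)
    (subseq_limit_stationary Ppos r1 r2 steps LU LQ LW phi_incr cT) _.
  by apply: le_lt_trans (stnorm_le_of_stcvg cT (fun k => iter_le (phi k))) _; rewrite ltrDl.
split; [exact: bound | move=> phi T phi_incr cT | ].
  by apply: limS phi_incr _; apply/stcvg_stdistP.
exact: dist_cvg0_of_subseq_limits (fun k => ltW (bound k)) limS.
Qed.
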